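(* Let $\xi$ be any boundary condition, $\sigma\in\Omega^\xi$ and $x\in F_{\mathrm{dec}}(\sigma)\cup F_{\mathrm{diag}}(\sigma)$. Let $\Delta_1=(\sigma_{y_1},\sigma_{z_1},\sigma_{w_1})$ and $\Delta_2=(\sigma_{y_2},\sigma_{z_2},\sigma_{w_2})$ be triangles of $\sigma$ with $|\sigma_{y_1}|>|\sigma_{z_1}|\ge|\sigma_{w_1}|$ and $|\sigma_{y_2}|>|\sigma_{z_2}|\ge|\sigma_{w_2}|$, such that for $i=1,2$ the midpoints $y_i,z_i,w_i$ belong to $\tau(\sigma,x)$ with $z_i,w_i$ children of $y_i$, and such that $y_1$ is an ancestor of $y_2$ in $\tau(\sigma,x)$. Then $|\sigma_{w_1}|\ge|\sigma_{w_2}|$.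
   Context: Let $P$ be a lattice polygon (a simple polygon whose vertices lie in $\mathbb{Z}^2$ and whose sides contain no points of $\mathbb{Z}^2$ other than their endpoints) and let $\Lambda^0$ be the set of points of $\mathbb{Z}^2$ in $P$ (including its boundary). Edges are open straight line segments with endpoints in $\Lambda^0$; $|e|$ denotes the $\ell_1$ length of an edge $e$. A triangulation of $\Lambda^0$ is a maximal collection of pairwise disjoint edges none of which contains a point of $\Lambda^0$; the set $\Lambda$ of midpoints of its edges does not depend on the triangulation, and $\sigma_x$ denotes the edge of $\sigma$ of midpoint $x$. A boundary condition $\xi$ is a set of pairwise disjoint edges containing no point of $\Lambda^0$ and containing all sides of $P$; $\Omega^\xi$ is the set of triangulations containing every edge of $\xi$. In each triangle of a triangulation there is a unique longest edge (in $\ell_1$ length). A unit diagonal is a diagonal of a unit square of $\mathbb{Z}^2$. $F_{\mathrm{dec}}(\sigma)$ is the set of $x\in\Lambda$ such that $\sigma_x$ is not a unit diagonal and is the longest edge of every triangle of $\sigma$ containing it; $F_{\mathrm{diag}}(\sigma)$ is the set of $x$ such that $\sigma_x$ is a unit diagonal and is the longest edge of every triangle of $\sigma$ containing it. Tree of influence: for $x\in F_{\mathrm{dec}}(\sigma)\cup F_{\mathrm{diag}}(\sigma)$ and a triangle $\Delta$ of $\sigma$ containing $\sigma_x$, the rooted structure $\tau^\Delta(\sigma,x)$ on midpoints is built as follows: its root is $x$ and the children of $x$ are the midpoints of the other two edges of $\Delta$; inductively, for a vertex $y$ with parent $z$, let $\Delta'$ be the triangle of $\sigma$ containing $\sigma_y$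 but not $\sigma_z$; if $\Delta'$ exists and $\sigma_y$ is its longest edge, the children of $y$ are the midpoints of the two other edges of $\Delta'$, otherwise $y$ has no children. $\tau(\sigma,x)$ is the union over the (one or two) triangles $\Delta$ containing $\sigma_x$ of $\tau^\Delta(\sigma,x)$, rooted at $x$ (it is a tree); ancestors refer to parent-to-child paths. *)

From Stdlib Require Import ZArith Reals List Relations.
Open Scope R_scope.

(** Lattice points and (unordered) edges, represented by endpoint pairs. *)
Definition pt := (Z * Z)%type.
Definition edge := (pt * pt)%type.
Definition tri := (pt * pt * pt)%type.
Definition rpt := (R * R)%type.

Definition rx (p : pt) : R := IZR (fst p).
Definition ry (p : pt) : R := IZR (snd p).
Definition emb (p : pt) : rpt := (rx p, ry p).

Definition in_open_seg (e : edge) (q : rpt) : Prop :=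
  exists t, 0 < t < 1 /\
    fst q = rx (fst e) + t * (rx (snd e) - rx (fst e)) /\
    snd q = ry (fst e) + t * (ry (snd e) - ry (fst e)).
Definition in_closed_seg (e : edge) (q : rpt) : Prop :=
  exists t, 0 <= t <= 1 /\
    fst q = rx (fst e) + t * (rx (snd e) - rx (fst e)) /\
    snd q = ry (fst e) + t * (ry (snd e) - ry (fst e)).

Definition same_edge (e e' : edge) : Prop :=
  e = e' \/ e = (snd e', fst e').

Definition side (vs : list pt) (i : nat) : edge :=
  (nth i vs (0%Z, 0%Z), nth ((i + 1) mod length vs) vs (0%Z, 0%Z)).

Definition is_endpoint (v : pt) (e : edge) : Prop := v = fst e \/ v = snd e.

Definition lattice_polygon (vs : list pt) : Prop :=
  (3 <= length vs)%nat /\ NoDup vs /\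
  (forall i j, (i < length vs)%nat -> (j < length vs)%nat -> i <> j ->
     forall q, in_closed_seg (side vs i) q -> in_closed_seg (side vs j) q ->
       exists v, q = emb v /\ is_endpoint v (side vs i) /\ is_endpoint v (side vs j)) /\
  (forall i, (i < length vs)%nat -> forall p : pt, ~ in_open_seg (side vs i) (emb p)).

(** Closed region bounded by the polygon: boundary points, plus points whose
    horizontal rightward ray crosses the boundary an odd number of times
    (standard half-open crossing rule). *)
Definition Rltb (a b : R) : bool := if Rlt_dec a b then true else false.

Definition crosses (q : rpt) (e : edge) : bool :=
  let ay := ry (fst e) in let by_ := ry (snd e) in
  if Bool.eqb (Rltb (snd q) ay) (Rltb (snd q) by_) then false
  else Rltb (fst q) (rx (fst e) + (snd q - ay) * (rx (snd e) - rx (fst e)) / (by_ - ay)).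

Definition crossing_number (vs : list pt) (q : rpt) : nat :=
  length (filter (crosses q) (map (side vs) (seq 0 (length vs)))).

Definition on_boundary (vs : list pt) (q : rpt) : Prop :=
  exists i, (i < length vs)%nat /\ in_closed_seg (side vs i) q.

Definition inP (vs : list pt) (q : rpt) : Prop :=
  on_boundary vs q \/ Nat.odd (crossing_number vs q) = true.

Definition Lambda0 (vs : list pt) (p : pt) : Prop := inP vs (emb p).

Definition is_edge (vs : list pt) (e : edge) : Prop :=
  fst e <> snd e /\ Lambda0 vs (fst e) /\ Lambda0 vs (snd e) /\
  (forall q, in_open_seg e q -> inP vs q).

Definition avoids_Lambda0 (vs : list pt) (e : edge) : Prop :=
  forall p, Lambda0 vs p -> ~ in_open_seg e (emb p).

Definition disjoint_edges (e e' : edge) : Prop :=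
  forall q, ~ (in_open_seg e q /\ in_open_seg e' q).

Definition inS (S : edge -> Prop) (e : edge) : Prop :=
  exists e', S e' /\ same_edge e e'.

Definition admissible_collection (vs : list pt) (S : edge -> Prop) : Prop :=
  (forall e, S e -> is_edge vs e /\ avoids_Lambda0 vs e) /\
  (forall e e', S e -> S e' -> ~ same_edge e e' -> disjoint_edges e e').

Definition triangulation (vs : list pt) (sigma : edge -> Prop) : Prop :=
  admissible_collection vs sigma /\
  (forall e, is_edge vs e -> avoids_Lambda0 vs e ->
     (forall e', sigma e' -> ~ same_edge e e' -> disjoint_edges e e') ->
     inS sigma e).

Definition boundary_condition (vs : list pt) (xi : edge -> Prop) : Prop :=
  admissible_collection vs xi /\
  (forall i, (i < length vs)%nat -> inS xi (side vs i)).

Definition Omega (vs : list pt) (xi sigma : edge -> Prop) : Prop :=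
  triangulation vs sigma /\ (forall e, xi e -> inS sigma e).

(** Midpoints, in doubled coordinates (the midpoint of (a,b) is (a+b)/2;
    we record a+b in Z^2). *)
Definition mid (e : edge) : pt :=
  (fst (fst e) + fst (snd e), snd (fst e) + snd (snd e))%Z.

Definition sig_at (sigma : edge -> Prop) (x : pt) (e : edge) : Prop :=
  inS sigma e /\ mid e = x.

Definition len (e : edge) : Z :=
  (Z.abs (fst (fst e) - fst (snd e)) + Z.abs (snd (fst e) - snd (snd e)))%Z.

Definition unit_diag (e : edge) : Prop :=
  Z.abs (fst (fst e) - fst (snd e)) = 1%Z /\ Z.abs (snd (fst e) - snd (snd e)) = 1%Z.

Definition tA (D : tri) : pt := fst (fst D).
Definition tB (D : tri) : pt := snd (fst D).
Definition tC (D : tri) : pt := snd D.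

Definition tri_has (D : tri) (e : edge) : Prop :=
  same_edge e (tA D, tB D) \/ same_edge e (tB D, tC D) \/ same_edge e (tC D, tA D).

Definition tri_mid (D : tri) (y : pt) : Prop :=
  mid (tA D, tB D) = y \/ mid (tB D, tC D) = y \/ mid (tC D, tA D) = y.

Definition noncollinear (D : tri) : Prop :=
  ((fst (tB D) - fst (tA D)) * (snd (tC D) - snd (tA D))
   - (snd (tB D) - snd (tA D)) * (fst (tC D) - fst (tA D)) <> 0)%Z.

Definition in_tri_interior (D : tri) (q : rpt) : Prop :=
  exists al be ga, 0 < al /\ 0 < be /\ 0 < ga /\ al + be + ga = 1 /\
    fst q = al * rx (tA D) + be * rx (tB D) + ga * rx (tC D) /\
    snd q = al * ry (tA D) + be * ry (tB D) + ga * ry (tC D).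

Definition is_tri (sigma : edge -> Prop) (D : tri) : Prop :=
  noncollinear D /\
  inS sigma (tA D, tB D) /\ inS sigma (tB D, tC D) /\ inS sigma (tC D, tA D) /\
  (forall e q, sigma e -> in_open_seg e q -> ~ in_tri_interior D q).

Definition longest_at (D : tri) (y : pt) : Prop :=
  exists e, tri_has D e /\ mid e = y /\ (forall e', tri_has D e' -> (len e' <= len e)%Z).

Definition longest_edge (D : tri) (e : edge) : Prop :=
  tri_has D e /\ (forall e', tri_has D e' -> (len e' <= len e)%Z).

Definition Fdec (sigma : edge -> Prop) (x : pt) : Prop :=
  exists e, sig_at sigma x e /\ ~ unit_diag e /\
    (forall D, is_tri sigma D -> tri_has D e -> longest_edge D e).

Definition Fdiag (sigma : edge -> Prop) (x : pt) : Prop :=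
  exists e, sig_at sigma x e /\ unit_diag e /\
    (forall D, is_tri sigma D -> tri_has D e -> longest_edge D e).

(** Tree of influence tau(sigma,x): parent-child relation on midpoints. *)
Inductive tchild (sigma : edge -> Prop) (x : pt) : pt -> pt -> Prop :=
| tc_root : forall D c,
    is_tri sigma D -> tri_mid D x -> tri_mid D c -> c <> x ->
    tchild sigma x x c
| tc_step : forall z y D c,
    tchild sigma x z y ->
    is_tri sigma D -> tri_mid D y -> ~ tri_mid D z -> longest_at D y ->
    tri_mid D c -> c <> y ->
    tchild sigma x y c.

Definition in_tree (sigma : edge -> Prop) (x y : pt) : Prop :=
  y = x \/ exists p, tchild sigma x p y.

Definition ancestor (sigma : edge -> Prop) (x a b : pt) : Prop :=
  clos_trans pt (tchild sigma x) a b.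

From Stdlib Require Import ZArith Reals List Lra Lia Bool Classical.

(* Every triangle of [sigma] is unimodular.  Its interior lies in [P] (the parity
   of the crossing number is constant on segments avoiding the boundary), so by
   maximality of [sigma] it contains no lattice point; its sides contain none
   either, and a lattice triangle with no lattice point besides its vertices has
   determinant [+-1].  Hence if [P Q R] and [P Q S] are triangles of [sigma]
   glued along [P Q], then [S - P = k z - p] for some integer [k], where
   [z = Q - P] and [p = R - P].  If moreover [P Q] is a longest side of [P Q S],
   the points [j z - p] within distance [|z|] of the origin lie at most two steps
   apart on their line, which forces the shortest side of [P Q S] to be at most
   the shortest side of [P Q R].  Going from a vertex of [tau(sigma, x)] to a
   child, the edge of the child is longest in the next triangle, so the length of
   the shortest side does not increase from [y1] down to [y2]; in the triangles
   [Delta_1] and [Delta_2] this length is [|sigma_w1|] and [|sigma_w2|]. *)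

(** * Parity of the crossing number *)

Open Scope R_scope.

Lemma Rltb_true_iff a b : Rltb a b = true <-> a < b.
Proof. unfold Rltb; destruct (Rlt_dec a b); split; intros; auto; try discriminate; lra. Qed.

Lemma Rltb_false_iff a b : Rltb a b = false <-> b <= a.
Proof. unfold Rltb; destruct (Rlt_dec a b); split; intros; auto; try discriminate; lra. Qed.

Lemma Rltb_lt a b : a < b -> Rltb a b = true.
Proof. apply Rltb_true_iff. Qed.

Lemma Rltb_ge a b : b <= a -> Rltb a b = false.
Proof. apply Rltb_false_iff. Qed.

Ltac destruct_Rltb := repeat match goal with
  | |- context [Rltb ?a ?b] =>
      let H := fresh in destruct (Rlt_dec a b) as [H|H];
      [rewrite (Rltb_lt a b H) | rewrite (Rltb_ge a b (Rnot_lt_le _ _ H))]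
  end.

Lemma Rdiv_nonneg a b : 0 <= a -> 0 < b -> 0 <= a / b.
Proof. intros; unfold Rdiv; apply Rmult_le_pos; [lra|left; apply Rinv_0_lt_compat; lra]. Qed.

Lemma Rdiv_unit_interval a b : 0 <= a -> a <= b -> 0 < b -> 0 <= a / b <= 1.
Proof.
  intros Ha Hab Hb. split; [apply Rdiv_nonneg; lra|].
  apply Rmult_le_reg_r with b; [lra|]. field_simplify; lra.
Qed.

Definition crossesR (qx qy ax ay bx by_ : R) : bool :=
  if Bool.eqb (Rltb qy ay) (Rltb qy by_) then false
  else Rltb qx (ax + (qy - ay) * (bx - ax) / (by_ - ay)).

(* [passes_left u v p]: the segment [u v] reaches the height of [p], excluding its
   lower endpoint, strictly to the left of [p].  Moving a point from [u] to [v]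
   toggles its crossing with a side [a b] once for each endpoint of [a b] that
   [u v] passes left of. *)
Definition passes_left (ux uy vx vy px py : R) : bool :=
  if Rlt_dec uy vy then Rltb uy py && negb (Rltb vy py) && Rltb (ux + (py-uy)*(vx-ux)/(vy-uy)) px
  else if Rlt_dec vy uy then Rltb vy py && negb (Rltb uy py) && Rltb (vx + (py-vy)*(ux-vx)/(uy-vy)) px
  else false.

Definition segs_disjoint (ux uy vx vy ax ay bx by_ : R) : Prop :=
  forall t s, 0 <= t <= 1 -> 0 <= s <= 1 ->
    ~ (ux + t * (vx - ux) = ax + s * (bx - ax) /\ uy + t * (vy - uy) = ay + s * (by_ - ay)).

Lemma segs_disjoint_swap_r ux uy vx vy ax ay bx by_ :
  segs_disjoint ux uy vx vy ax ay bx by_ -> segs_disjoint ux uy vx vy bx by_ ax ay.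
Proof. intros H t s Ht Hs [E1 E2]. apply (H t (1-s) Ht ltac:(lra)). split; lra. Qed.

Lemma segs_disjoint_swap_l ux uy vx vy ax ay bx by_ :
  segs_disjoint ux uy vx vy ax ay bx by_ -> segs_disjoint vx vy ux uy ax ay bx by_.
Proof. intros H t s Ht Hs [E1 E2]. apply (H (1-t) s ltac:(lra) Hs). split; lra. Qed.

Lemma affine_pos_iff c0 c1 y1 y2 : y1 <= y2 ->
  (forall y, y1 <= y <= y2 -> c0 + c1 * y <> 0) ->
  (0 < c0 + c1 * y1 <-> 0 < c0 + c1 * y2).
Proof.
  intros Hle H.
  assert (H1 := H y1 ltac:(lra)). assert (H2 := H y2 ltac:(lra)).
  assert (Hroot : c1 <> 0 -> y1 <= - c0 / c1 <= y2 -> False)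
    by (intros Hc Hy; apply (H _ Hy); field; auto).
  split; intro Hp; destruct (Rlt_dec 0 (c0 + c1 * y2)) as [|Hn]; auto;
    destruct (Rlt_dec 0 (c0 + c1 * y1)) as [|Hn']; auto; try lra; exfalso.
  - assert (Hc : c1 < 0) by nra. apply Hroot; [lra|split];
      apply Rmult_le_reg_r with (- c1); try lra;
      replace (- c0 / c1 * - c1) with c0 by (field; lra); lra.
  - assert (Hc : c1 > 0) by nra. apply Hroot; [lra|split];
      apply Rmult_le_reg_r with c1; try lra;
      replace (- c0 / c1 * c1) with (- c0) by (field; lra); lra.
Qed.

Lemma Rltb_affine_const c0 c1 lo hi :
  (forall y, lo <= y <= hi -> c0 + c1 * y <> 0) ->
  forall y y', lo <= y <= hi -> lo <= y' <= hi -> Rltb 0 (c0 + c1 * y) = Rltb 0 (c0 + c1 * y').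
Proof.
  intros H.
  assert (Hle : forall y y', lo <= y <= y' -> y' <= hi ->
            Rltb 0 (c0 + c1 * y) = Rltb 0 (c0 + c1 * y')).
  { intros y y' Hy Hy'.
    assert (E := affine_pos_iff c0 c1 y y' ltac:(lra) (fun z Hz => H z ltac:(lra))).
    destruct (Rltb 0 (c0 + c1 * y)) eqn:E1; destruct (Rltb 0 (c0 + c1 * y')) eqn:E2; auto.
    - apply Rltb_true_iff in E1; apply Rltb_false_iff in E2. apply E in E1. lra.
    - apply Rltb_false_iff in E1; apply Rltb_true_iff in E2. apply E in E2. lra. }
  intros y y' Hy Hy'. destruct (Rle_dec y y').
  - apply Hle; lra.
  - symmetry; apply Hle; lra.
Qed.

Lemma crossesR_upward qx qy ax ay bx by_ : ay < by_ ->
  crossesR qx qy ax ay bx by_ =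
  (negb (Rltb qy ay) && Rltb qy by_) && Rltb 0 (ax + (qy - ay) * ((bx - ax) / (by_ - ay)) - qx).
Proof.
  intros Hab. unfold crossesR.
  destruct (Rltb qy ay) eqn:E1; destruct (Rltb qy by_) eqn:E2; simpl; auto.
  - apply Rltb_true_iff in E1; apply Rltb_false_iff in E2; lra.
  - unfold Rltb; destruct (Rlt_dec qx _); destruct (Rlt_dec 0 _); auto;
      exfalso; unfold Rdiv in *; lra.
Qed.

Lemma passes_left_upward ux uy vx vy px py : uy < vy ->
  passes_left ux uy vx vy px py =
  (Rltb uy py && negb (Rltb vy py)) && Rltb 0 (px - (ux + (py - uy) * ((vx - ux) / (vy - uy)))).
Proof.
  intros Huv. unfold passes_left. destruct (Rlt_dec uy vy); [|lra].
  f_equal. unfold Rltb; destruct (Rlt_dec (ux + _) px); destruct (Rlt_dec 0 _); auto;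
    exfalso; unfold Rdiv in *; lra.
Qed.

(* On the common height range of side and segment, both are graphs of affine
   functions of the height [y]; their horizontal gap [c0 + c1 y] keeps its sign
   there because the two do not meet. *)
Lemma crossing_change_upward ux uy vx vy ax ay bx by_ :
  uy < vy -> ay < by_ -> segs_disjoint ux uy vx vy ax ay bx by_ ->
  xorb (crossesR ux uy ax ay bx by_) (crossesR vx vy ax ay bx by_) =
  xorb (passes_left ux uy vx vy ax ay) (passes_left ux uy vx vy bx by_).
Proof.
  intros Huv Hab HN.
  rewrite !crossesR_upward, !passes_left_upward by auto.
  set (cs := (bx-ax)/(by_-ay)). set (cu := (vx-ux)/(vy-uy)).
  set (c1 := cs - cu). set (c0 := ax - ay*cs - ux + uy*cu).
  assert (Hgap : forall y, ax + (y-ay)*cs - (ux + (y-uy)*cu) = c0 + c1*y)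
    by (intros; unfold c0, c1; ring).
  replace (ax + (uy - ay) * cs - ux) with (c0 + c1*uy) by (unfold c0, c1; ring).
  replace (ax + (vy - ay) * cs - vx) with (c0 + c1*vy) by (unfold c0, c1, cu; field; lra).
  replace (ax - (ux + (ay - uy) * cu)) with (c0 + c1*ay) by (unfold c0, c1; ring).
  replace (bx - (ux + (by_ - uy) * cu)) with (c0 + c1*by_) by (unfold c0, c1, cs; field; lra).
  set (lo := Rmax ay uy). set (hi := Rmin by_ vy).
  assert (Hrange : forall y, lo <= y <= hi <-> ay <= y /\ uy <= y /\ y <= by_ /\ y <= vy)
    by (intros; unfold lo, hi, Rmax, Rmin; destruct (Rle_dec ay uy), (Rle_dec by_ vy); lra).
  assert (Hnz : forall y, lo <= y <= hi -> c0 + c1*y <> 0).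
  { intros y Hy He. apply Hrange in Hy.
    apply (HN ((y-uy)/(vy-uy)) ((y-ay)/(by_-ay)));
      [apply Rdiv_unit_interval; lra | apply Rdiv_unit_interval; lra|].
    rewrite <- Hgap in He. split; [|field; lra].
    replace (ux + (y - uy) / (vy - uy) * (vx - ux)) with (ux + (y-uy)*cu) by (unfold cu; field; lra).
    replace (ax + (y - ay) / (by_ - ay) * (bx - ax)) with (ax + (y-ay)*cs) by (unfold cs; field; lra).
    lra. }
  set (sg := Rltb 0 (c0 + c1 * lo)).
  assert (Hsg : forall (A : bool) y, (A = true -> lo <= y <= hi) ->
             A && Rltb 0 (c0 + c1*y) = A && sg).
  { intros A y HA. destruct A; auto. simpl. unfold sg.
    apply (Rltb_affine_const _ _ _ _ Hnz); auto.
    destruct (HA eq_refl); split; lra. }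
  rewrite (Hsg _ uy), (Hsg _ vy), (Hsg _ ay), (Hsg _ by_);
    [| rewrite Hrange; destruct_Rltb; simpl; intro E; try discriminate; repeat split; lra ..].
  destruct sg; simpl; [|rewrite !andb_false_r; reflexivity].
  rewrite !andb_true_r. destruct_Rltb; simpl; auto; lra.
Qed.

Lemma crossesR_swap qx qy ax ay bx by_ : ay <> by_ ->
  crossesR qx qy ax ay bx by_ = crossesR qx qy bx by_ ax ay.
Proof.
  intro H. unfold crossesR.
  destruct (Rltb qy ay), (Rltb qy by_); simpl; auto.
  all: replace (ax + (qy - ay) * (bx - ax) / (by_ - ay))
         with (bx + (qy - by_) * (ax - bx) / (ay - by_)); auto; field; split; lra.
Qed.

Lemma passes_left_sym ux uy vx vy px py :
  passes_left ux uy vx vy px py = passes_left vx vy ux uy px py.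
Proof. unfold passes_left. destruct (Rlt_dec uy vy); destruct (Rlt_dec vy uy); auto; lra. Qed.

Lemma passes_left_horizontal_side ux uy vx vy ax ay bx :
  uy < vy -> segs_disjoint ux uy vx vy ax ay bx ay ->
  passes_left ux uy vx vy ax ay = passes_left ux uy vx vy bx ay.
Proof.
  intros Huv HN. unfold passes_left. destruct (Rlt_dec uy vy); [|lra].
  destruct (Rltb uy ay && negb (Rltb vy ay)) eqn:E; simpl; auto.
  apply andb_true_iff in E as [E1 E2]. apply negb_true_iff in E2.
  apply Rltb_true_iff in E1; apply Rltb_false_iff in E2.
  set (Lx := ux + (ay - uy) * (vx - ux) / (vy - uy)).
  assert (Hpt : forall s, 0 <= s <= 1 -> Lx = ax + s*(bx - ax) -> False).
  { intros s Hs Hx. apply (HN ((ay-uy)/(vy-uy)) s); [apply Rdiv_unit_interval; lra|auto|].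
    split; [rewrite <- Hx; unfold Lx|]; field; lra. }
  unfold Rltb; destruct (Rlt_dec Lx ax); destruct (Rlt_dec Lx bx); auto; exfalso;
    apply (Hpt ((Lx - ax)/(bx-ax))); try (field; lra).
  - replace ((Lx - ax) / (bx - ax)) with ((ax - Lx) / (ax - bx)) by (field; lra).
    apply Rdiv_unit_interval; lra.
  - apply Rdiv_unit_interval; lra.
Qed.

Lemma crossesR_horizontal_seg ux vx uy ax ay bx by_ :
  segs_disjoint ux uy vx uy ax ay bx by_ ->
  crossesR ux uy ax ay bx by_ = crossesR vx uy ax ay bx by_.
Proof.
  intros HN. unfold crossesR.
  destruct (Bool.eqb (Rltb uy ay) (Rltb uy by_)) eqn:E; auto.
  assert (Hs : 0 <= (uy - ay)/(by_ - ay) <= 1 /\ ay <> by_).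
  { revert E; destruct_Rltb; simpl; intro E; try discriminate; split; try lra.
    - replace ((uy - ay) / (by_ - ay)) with ((ay - uy) / (ay - by_)) by (field; lra).
      apply Rdiv_unit_interval; lra.
    - apply Rdiv_unit_interval; lra. }
  destruct Hs as [Hs Hab].
  set (X := ax + (uy - ay) * (bx - ax) / (by_ - ay)).
  assert (Hpt : forall t, 0 <= t <= 1 -> ux + t*(vx-ux) = X -> False).
  { intros t Ht Hx. apply (HN t _ Ht Hs).
    split; [rewrite Hx; unfold X|]; field; lra. }
  unfold Rltb; destruct (Rlt_dec ux X); destruct (Rlt_dec vx X); auto; exfalso;
    apply (Hpt ((X - ux)/(vx-ux))); try (field; lra).
  - apply Rdiv_unit_interval; lra.
  - replace ((X - ux) / (vx - ux)) with ((ux - X) / (ux - vx)) by (field; lra).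
    apply Rdiv_unit_interval; lra.
Qed.

Lemma crossing_change_upward_seg ux uy vx vy ax ay bx by_ :
  uy < vy -> segs_disjoint ux uy vx vy ax ay bx by_ ->
  xorb (crossesR ux uy ax ay bx by_) (crossesR vx vy ax ay bx by_) =
  xorb (passes_left ux uy vx vy ax ay) (passes_left ux uy vx vy bx by_).
Proof.
  intros Huv HN. destruct (Rtotal_order ay by_) as [Hab|[Hab|Hab]].
  - apply crossing_change_upward; auto.
  - subst by_. unfold crossesR. rewrite !Bool.eqb_reflx. simpl.
    rewrite (passes_left_horizontal_side ux uy vx vy ax ay bx); auto.
    destruct (passes_left _ _ _ _ _ _); auto.
  - rewrite (crossesR_swap ux), (crossesR_swap vx) by lra.
    rewrite xorb_comm with (b := passes_left _ _ _ _ ax ay).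
    apply crossing_change_upward; auto. apply segs_disjoint_swap_r; auto.
Qed.

Lemma crossing_change ux uy vx vy ax ay bx by_ :
  segs_disjoint ux uy vx vy ax ay bx by_ ->
  xorb (crossesR ux uy ax ay bx by_) (crossesR vx vy ax ay bx by_) =
  xorb (passes_left ux uy vx vy ax ay) (passes_left ux uy vx vy bx by_).
Proof.
  intros HN. destruct (Rtotal_order uy vy) as [Huv|[Huv|Huv]].
  - apply crossing_change_upward_seg; auto.
  - subst vy. rewrite (crossesR_horizontal_seg ux vx uy ax ay bx by_ HN). unfold passes_left.
    destruct (Rlt_dec uy uy); [lra|]. rewrite !xorb_nilpotent. reflexivity.
  - rewrite xorb_comm, (passes_left_sym ux), (passes_left_sym ux).
    apply crossing_change_upward_seg; auto. apply segs_disjoint_swap_l; auto.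
Qed.

Fixpoint xor_list (f : nat -> bool) (l : list nat) : bool :=
  match l with nil => false | i :: l' => xorb (f i) (xor_list f l') end.

Lemma odd_count_xor_list f l : Nat.odd (length (filter f l)) = xor_list f l.
Proof.
  induction l as [|i l IH]; simpl; auto.
  destruct (f i); simpl; rewrite <- IH; auto.
  rewrite Nat.odd_succ, <- Nat.negb_odd. destruct (Nat.odd _); reflexivity.
Qed.

Lemma xor_list_ext f g l : (forall i, In i l -> f i = g i) -> xor_list f l = xor_list g l.
Proof. induction l; simpl; intros H; auto. rewrite H, IHl; auto. Qed.

Lemma xor_list_xorb f g l :
  xorb (xor_list f l) (xor_list g l) = xor_list (fun i => xorb (f i) (g i)) l.
Proof.
  induction l; simpl; auto. rewrite <- IHl.
  destruct (f a), (g a), (xor_list f l), (xor_list g l); reflexivity.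
Qed.

Lemma xor_list_app f l1 l2 : xor_list f (l1 ++ l2) = xorb (xor_list f l1) (xor_list f l2).
Proof. induction l1; simpl; auto. rewrite IHl1, xorb_assoc. auto. Qed.

Lemma xor_list_shift f m n : xor_list (fun i => f (S i)) (seq m n) = xor_list f (seq (S m) n).
Proof. revert m; induction n; intros; simpl; auto. rewrite IHn. auto. Qed.

Lemma xor_list_rotate f n : (1 <= n)%nat ->
  xor_list (fun i => f ((i+1) mod n)%nat) (seq 0 n) = xor_list f (seq 0 n).
Proof.
  intros Hn. destruct n as [|m]; [lia|].
  rewrite seq_S at 1. rewrite xor_list_app. cbn [xor_list].
  rewrite (xor_list_ext _ (fun i => f (S i)) (seq 0 m)).
  2:{ intros i Hi. apply in_seq in Hi. f_equal. rewrite Nat.mod_small; lia. }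
  rewrite xor_list_shift. replace ((0+m+1) mod S m)%nat with 0%nat.
  2:{ replace (0+m+1)%nat with (S m) by lia. symmetry; apply Nat.Div0.mod_same. }
  cbn [seq xor_list]. rewrite xorb_false_r. destruct (f 0%nat), (xor_list f (seq 1 m)); reflexivity.
Qed.

Lemma filter_map_length {A B} (p : B -> bool) (h : A -> B) l :
  length (filter p (map h l)) = length (filter (fun a => p (h a)) l).
Proof. induction l; simpl; auto. destruct (p (h a)); simpl; auto. Qed.

(* Each vertex of the polygon is an endpoint of two sides, so the contributions
   of [passes_left] cancel around the polygon. *)
Lemma crossing_parity_const (vs : list pt) (u v : rpt) :
  (1 <= length vs)%nat ->
  (forall i, (i < length vs)%nat ->
     segs_disjoint (fst u) (snd u) (fst v) (snd v)
       (rx (fst (side vs i))) (ry (fst (side vs i))) (rx (snd (side vs i))) (ry (snd (side vs i)))) ->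
  Nat.odd (crossing_number vs u) = Nat.odd (crossing_number vs v).
Proof.
  intros Hn H. unfold crossing_number. rewrite !filter_map_length, !odd_count_xor_list.
  set (n := length vs).
  set (w := fun i => passes_left (fst u) (snd u) (fst v) (snd v)
                       (rx (nth i vs (0%Z,0%Z))) (ry (nth i vs (0%Z,0%Z)))).
  assert (E : xorb (xor_list (fun a => crosses u (side vs a)) (seq 0 n))
                   (xor_list (fun a => crosses v (side vs a)) (seq 0 n)) = false).
  { rewrite xor_list_xorb, (xor_list_ext _ (fun i => xorb (w i) (w ((i+1) mod n)%nat))).
    - rewrite <- xor_list_xorb, xor_list_rotate by auto. apply xorb_nilpotent.
    - intros i Hi. apply in_seq in Hi.
      exact (crossing_change _ _ _ _ _ _ _ _ (H i ltac:(lia))). }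
  destruct (xor_list _ (seq 0 n)), (xor_list _ (seq 0 n)); simpl in *; auto; discriminate.
Qed.

Lemma same_edge_refl e : same_edge e e.
Proof. left; auto. Qed.

Lemma same_edge_sym e e' : same_edge e e' -> same_edge e' e.
Proof. destruct e, e'; unfold same_edge; simpl; intros [H|H]; inversion H; subst; auto. Qed.

Lemma same_edge_trans e1 e2 e3 : same_edge e1 e2 -> same_edge e2 e3 -> same_edge e1 e3.
Proof.
  destruct e1, e2, e3; unfold same_edge; simpl;
    intros [H|H] [H'|H']; inversion H; inversion H'; subst; auto.
Qed.

Lemma same_edge_swap a b : same_edge (a,b) (b,a).
Proof. right; auto. Qed.

Lemma in_open_seg_swap a b q : in_open_seg (a,b) q -> in_open_seg (b,a) q.
Proof. intros (t & Ht & E1 & E2). exists (1-t). simpl in *. split; [lra|]. split; lra. Qed.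

Lemma in_open_seg_same e e' q : same_edge e e' -> in_open_seg e q -> in_open_seg e' q.
Proof. destruct e, e'; intros [H|H] Ho; inversion H; subst; auto. apply in_open_seg_swap; auto. Qed.

Lemma inS_same S e e' : same_edge e e' -> inS S e -> inS S e'.
Proof.
  intros H (f & Hf & Hs). exists f; split; auto.
  eapply same_edge_trans; eauto. apply same_edge_sym; auto.
Qed.

Lemma len_same e e' : same_edge e e' -> len e = len e'.
Proof.
  destruct e as [[a1 a2][b1 b2]], e' as [[c1 c2][d1 d2]];
    intros [H|H]; inversion H; subst; unfold len; simpl; lia.
Qed.

Lemma len_swap a b : len (a,b) = len (b,a).
Proof. apply len_same, same_edge_swap. Qed.

Lemma mid_same e e' : same_edge e e' -> mid e = mid e'.
Proof.
  destruct e as [[a1 a2][b1 b2]], e' as [[c1 c2][d1 d2]];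
    intros [H|H]; inversion H; subst; unfold mid; simpl; f_equal; lia.
Qed.

(* [mid] records twice the midpoint; [rmid] is the actual point of the plane. *)
Definition rmid (e : edge) : rpt :=
  ((rx (fst e) + rx (snd e)) / 2, (ry (fst e) + ry (snd e)) / 2).

Lemma rmid_in_open_seg e : in_open_seg e (rmid e).
Proof. exists (1/2). unfold rmid; simpl. split; [lra|]. split; field. Qed.

Lemma rmid_of_mid e e' : mid e = mid e' -> rmid e = rmid e'.
Proof.
  destruct e as [[a1 a2][b1 b2]], e' as [[c1 c2][d1 d2]]; unfold mid, rmid, rx, ry; simpl.
  intros H; inversion H. rewrite <- !plus_IZR. rewrite H1, H2. auto.
Qed.

Definition seg_pt (u v : rpt) (t : R) : rpt :=
  (fst u + t*(fst v - fst u), snd u + t*(snd v - snd u)).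

Definition interior3 (A B C : pt) (q : rpt) :=
  exists al be ga, 0<al /\ 0<be /\ 0<ga /\ al+be+ga = 1 /\
    fst q = al*rx A + be*rx B + ga*rx C /\ snd q = al*ry A + be*ry B + ga*ry C.

Lemma interior3_rot A B C q : interior3 A B C q -> interior3 B C A q.
Proof. intros (a&b&c&?&?&?&?&?&?). exists b, c, a. repeat split; lra. Qed.

Lemma interior3_ext A B C q q' :
  fst q = fst q' -> snd q = snd q' -> interior3 A B C q -> interior3 A B C q'.
Proof. destruct q, q'; simpl; intros; subst; auto. Qed.

Lemma interior3_convex A B C u v t :
  interior3 A B C u -> interior3 A B C v -> 0 <= t <= 1 -> interior3 A B C (seg_pt u v t).
Proof.
  intros (a&b&c&?&?&?&?&Hx&Hy) (a'&b'&c'&?&?&?&?&Hx'&Hy') Ht.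
  exists (a + t*(a'-a)), (b + t*(b'-b)), (c + t*(c'-c)). unfold seg_pt; simpl.
  rewrite Hx, Hy, Hx', Hy'. repeat split; try ring; try nra.
Qed.

Lemma interior3_toward_vertex A B C q t :
  interior3 A B C q -> 0 < t <= 1 -> interior3 A B C (seg_pt (emb A) q t).
Proof.
  intros (a&b&c&Ha&Hb&Hc&Hs&Hx&Hy) Ht. exists (1 - t + t*a), (t*b), (t*c).
  unfold seg_pt, emb; simpl. rewrite Hx, Hy. repeat split; try nra.
Qed.

Lemma interior3_of_edge_pt A B C s t : 0 < s < 1 -> 0 < t < 1 ->
  interior3 A B C ((1-t)*((1-s)*rx A + s*rx B) + t*rx C, (1-t)*((1-s)*ry A + s*ry B) + t*ry C).
Proof. intros Hs Ht. exists ((1-t)*(1-s)), ((1-t)*s), t. simpl. repeat split; try ring; nra. Qed.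

Definition detR (A B C : pt) := (rx B - rx A)*(ry C - ry A) - (ry B - ry A)*(rx C - rx A).

Definition detZ (A B C : pt) : Z :=
  ((fst B - fst A) * (snd C - snd A) - (snd B - snd A) * (fst C - fst A))%Z.

Lemma detR_IZR A B C : detR A B C = IZR (detZ A B C).
Proof. unfold detR, detZ, rx, ry. rewrite ?minus_IZR, ?mult_IZR, ?minus_IZR. ring. Qed.

Lemma detR_rot A B C : detR A B C = detR B C A.
Proof. unfold detR. ring. Qed.

Lemma noncollinear_detR D : noncollinear D -> detR (tA D) (tB D) (tC D) <> 0.
Proof. unfold noncollinear. intros H. rewrite detR_IZR. apply not_0_IZR. exact H. Qed.

Lemma detR_neq0_distinct A B C : detR A B C <> 0 -> A <> B /\ B <> C /\ C <> A.
Proof. intros HD; repeat split; intro E; apply HD; rewrite E; unfold detR; ring. Qed.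

(* With [(a1, b1, c1)] the barycentric coordinates of [q1], the point at parameter
   [t] has coordinates [(a, b, c) + t ((a1, b1, c1) - (a, b, c))], still positive
   for [t] small compared with [min (a, b, c)]. *)
Lemma interior3_open A B C q0 q1 : detR A B C <> 0 -> interior3 A B C q0 ->
  exists t, 0 < t < 1 /\ interior3 A B C (seg_pt q0 q1 t).
Proof.
  intros HD (a&b&c&Ha&Hb&Hc&Hs&Hx&Hy).
  destruct q1 as [x y].
  set (a1 := ((rx B - x)*(ry C - y) - (ry B - y)*(rx C - x)) / detR A B C).
  set (b1 := ((rx C - x)*(ry A - y) - (ry C - y)*(rx A - x)) / detR A B C).
  set (c1 := 1 - a1 - b1).
  assert (Ex : x = a1*rx A + b1*rx B + c1*rx C) by (unfold c1, a1, b1, detR in *; field; auto).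
  assert (Ey : y = a1*ry A + b1*ry B + c1*ry C) by (unfold c1, a1, b1, detR in *; field; auto).
  set (m := Rmin a (Rmin b c)).
  assert (Hm : 0 < m /\ m <= a /\ m <= b /\ m <= c)
    by (unfold m, Rmin; destruct (Rle_dec b c); destruct (Rle_dec a _); lra).
  set (M := Rabs (a1 - a) + Rabs (b1 - b) + Rabs (c1 - c)).
  pose proof (Rabs_pos (a1-a)). pose proof (Rabs_pos (b1-b)). pose proof (Rabs_pos (c1-c)).
  set (t := m / (2*(m+M))).
  assert (Ht : 0 < t) by (unfold t; apply Rdiv_lt_0_compat; unfold M; lra).
  assert (Ht2 : t * (2*(m+M)) = m) by (unfold t; field; unfold M; lra).
  assert (Hbound : forall d, Rabs d <= M -> 0 < m/2 + t*d).
  { intros d Hd. assert (t * Rabs d <= t * M) by (apply Rmult_le_compat_l; lra).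
    assert (- (t * Rabs d) <= t * d).
    { destruct (Rle_dec 0 d); [rewrite Rabs_right by lra | rewrite Rabs_left by lra]; nra. }
    nra. }
  pose proof (Hbound (a1 - a) ltac:(unfold M; lra)).
  pose proof (Hbound (b1 - b) ltac:(unfold M; lra)).
  pose proof (Hbound (c1 - c) ltac:(unfold M; lra)).
  exists t. split; [split; [auto|unfold M in *; nra]|].
  exists (a + t*(a1-a)), (b + t*(b1-b)), (c + t*(c1-c)).
  unfold seg_pt; simpl. repeat split; try lra.
  - transitivity ((a+b+c) + t*(1 - (a+b+c))); [unfold c1; ring| rewrite Hs; ring].
  - rewrite Hx, Ex. ring.
  - rewrite Hy, Ey. ring.
Qed.

Lemma crosses_swap q a b : crosses q (a,b) = crosses q (b,a).
Proof.
  unfold crosses; cbn [fst snd].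
  destruct (Req_dec (ry a) (ry b)) as [E|E].
  - rewrite E, !Bool.eqb_reflx. auto.
  - exact (crossesR_swap (fst q) (snd q) (rx a) (ry a) (rx b) (ry b) E).
Qed.

Definition crossing3 q (A B C : pt) : nat :=
  (Nat.b2n (crosses q (A,B)) + Nat.b2n (crosses q (B,C)) + Nat.b2n (crosses q (C,A)))%nat.

Lemma crossing3_rot q A B C : crossing3 q A B C = crossing3 q B C A.
Proof. unfold crossing3. lia. Qed.

Lemma crossing3_swap q A B C : crossing3 q A B C = crossing3 q B A C.
Proof. unfold crossing3. rewrite (crosses_swap q A B), (crosses_swap q B C), (crosses_swap q C A). lia. Qed.

Lemma crossing_number_triangle q A B C : crossing_number (A :: B :: C :: nil) q = crossing3 q A B C.
Proof.
  unfold crossing_number, crossing3. simpl. unfold side; simpl.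
  destruct (crosses q (A,B)), (crosses q (B,C)), (crosses q (C,A)); reflexivity.
Qed.

Definition is_side vs (E : edge) := exists i, (i < length vs)%nat /\ same_edge E (side vs i).

Definition cyclic_adjacent n i j :=
  ((j = i + 1 \/ (i + 1 = n /\ j = 0)) \/ (i = j + 1 \/ (j + 1 = n /\ i = 0)))%nat.

Lemma side_endpoints vs i A B : (i < length vs)%nat -> same_edge (A,B) (side vs i) ->
  exists a b, (a < length vs)%nat /\ (b < length vs)%nat /\
    nth a vs (0%Z,0%Z) = A /\ nth b vs (0%Z,0%Z) = B /\ cyclic_adjacent (length vs) a b.
Proof.
  intros Hi Hs. assert (Hm : ((i+1) mod length vs < length vs)%nat) by (apply Nat.mod_upper_bound; lia).
  assert (Hsucc : ((i+1) mod length vs = i + 1 /\ i + 1 < length vs)%nat \/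
                  (i + 1 = length vs /\ (i+1) mod length vs = 0)%nat).
  { destruct (Nat.eq_dec (i+1) (length vs)) as [E|E].
    - right. split; auto. rewrite E. apply Nat.Div0.mod_same.
    - left. split; [apply Nat.mod_small|]; lia. }
  unfold side, cyclic_adjacent in *. destruct Hs as [H|H]; inversion H; subst.
  - exists i, ((i+1) mod length vs)%nat. repeat split; auto; lia.
  - exists ((i+1) mod length vs)%nat, i. repeat split; auto; lia.
Qed.

(* Three sides of a polygon forming a triangle: the polygon is that triangle. *)
Lemma crossing_number_three_sides vs A B C : NoDup vs -> (3 <= length vs)%nat ->
  A <> B -> B <> C -> C <> A ->
  is_side vs (A,B) -> is_side vs (B,C) -> is_side vs (C,A) ->
  forall q, crossing_number vs q = crossing3 q A B C.
Proof.
  intros ND H3 HAB HBC HCA (i&Hi&Si) (j&Hj&Sj) (k&Hk&Sk) q.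
  destruct (side_endpoints _ _ _ _ Hi Si) as (a&b&Ha&Hb&EA&EB&Hab).
  destruct (side_endpoints _ _ _ _ Hj Sj) as (b'&c&Hb'&Hc&EB'&EC&Hbc).
  destruct (side_endpoints _ _ _ _ Hk Sk) as (c'&a'&Hc'&Ha'&EC'&EA'&Hca).
  pose proof (proj1 (NoDup_nth vs (0%Z,0%Z)) ND) as Inj.
  assert (a' = a) by (apply Inj; congruence). assert (b' = b) by (apply Inj; congruence).
  assert (c' = c) by (apply Inj; congruence). subst a' b' c'.
  assert (a <> b) by (intro; subst; congruence).
  assert (b <> c) by (intro; subst; congruence).
  assert (c <> a) by (intro; subst; congruence).
  assert (Hn : length vs = 3%nat) by (unfold cyclic_adjacent in *; lia).
  destruct vs as [|v0 [|v1 [|v2 [|v3 l]]]]; simpl in Hn; try lia.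
  rewrite crossing_number_triangle.
  pose proof (crossing3_rot q v0 v1 v2). pose proof (crossing3_rot q v1 v2 v0).
  pose proof (crossing3_swap q v0 v1 v2). pose proof (crossing3_swap q v1 v2 v0).
  pose proof (crossing3_swap q v2 v0 v1).
  simpl in Ha, Hb, Hc.
  assert (Ha3 : (a = 0 \/ a = 1 \/ a = 2)%nat) by lia.
  assert (Hb3 : (b = 0 \/ b = 1 \/ b = 2)%nat) by lia.
  assert (Hc3 : (c = 0 \/ c = 1 \/ c = 2)%nat) by lia.
  destruct Ha3 as [ -> | [ -> | -> ] ]; destruct Hb3 as [ -> | [ -> | -> ] ];
    destruct Hc3 as [ -> | [ -> | -> ] ]; try lia; simpl in EA, EB, EC; subst; lia.
Qed.

Lemma Rdiv_open_unit a b : 0 < a < b \/ b < a < 0 -> 0 < a / b < 1.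
Proof.
  intros [H|H].
  - split; [apply Rdiv_lt_0_compat; lra|].
    apply Rmult_lt_reg_r with b; [lra|]. field_simplify; lra.
  - replace (a / b) with ((- a) / (- b)) by (field; lra).
    split; [apply Rdiv_lt_0_compat; lra|].
    apply Rmult_lt_reg_r with (- b); [lra|]. field_simplify; lra.
Qed.

(* A horizontal line at height [y0] meeting the open sides [A B] and [A C] only:
   the midpoint of the chord is interior and its ray crosses exactly one side. *)
Lemma triangle_odd_point_at A B C y0 : detR A B C <> 0 ->
  0 < (y0 - ry A)/(ry B - ry A) < 1 -> 0 < (y0 - ry A)/(ry C - ry A) < 1 ->
  Bool.eqb (Rltb y0 (ry A)) (Rltb y0 (ry B)) = false ->
  Bool.eqb (Rltb y0 (ry B)) (Rltb y0 (ry C)) = true ->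
  Bool.eqb (Rltb y0 (ry C)) (Rltb y0 (ry A)) = false ->
  exists q, interior3 A B C q /\ crossing3 q A B C = 1%nat.
Proof.
  intros HD Hs1 Hs2 E1 E2 E3.
  assert (HB : ry B <> ry A) by (intro E; rewrite E in Hs1; unfold Rdiv in Hs1;
                                 rewrite Rminus_diag, Rinv_0, Rmult_0_r in Hs1; lra).
  assert (HC : ry C <> ry A) by (intro E; rewrite E in Hs2; unfold Rdiv in Hs2;
                                 rewrite Rminus_diag, Rinv_0, Rmult_0_r in Hs2; lra).
  set (s1 := (y0 - ry A)/(ry B - ry A)) in *. set (s2 := (y0 - ry A)/(ry C - ry A)) in *.
  assert (F1 : s1 * (ry B - ry A) = y0 - ry A) by (unfold s1; field; lra).
  assert (F2 : s2 * (ry C - ry A) = y0 - ry A) by (unfold s2; field; lra).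
  set (X1 := rx A + s1 * (rx B - rx A)). set (X2 := rx A + s2 * (rx C - rx A)).
  assert (HX : X1 <> X2).
  { intro HX. apply HD.
    assert (F3 : s1 * (rx B - rx A) = s2 * (rx C - rx A)) by (unfold X1, X2 in HX; lra).
    assert (F : s1 * s2 * detR A B C = 0).
    { unfold detR.
      transitivity ((s1*(rx B - rx A))*(s2*(ry C - ry A)) - (s1*(ry B - ry A))*(s2*(rx C - rx A)));
        [ring|].
      rewrite F1, F2, F3. ring. }
    apply Rmult_integral in F as [F|F]; auto. apply Rmult_integral in F as [F|F]; lra. }
  exists ((X1 + X2)/2, y0). split.
  - exists (1 - s1/2 - s2/2), (s1/2), (s2/2). simpl. repeat split; try lra.
    unfold X1, X2. field.
  - unfold crossing3, crosses; cbn [fst snd]. rewrite E1, E2, E3.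
    replace (rx A + (y0 - ry A) * (rx B - rx A) / (ry B - ry A)) with X1 by (unfold X1, s1; field; lra).
    replace (rx C + (y0 - ry C) * (rx A - rx C) / (ry A - ry C)) with X2 by (unfold X2, s2; field; lra).
    unfold Rltb. destruct (Rlt_dec ((X1 + X2)/2) X1); destruct (Rlt_dec ((X1 + X2)/2) X2); simpl;
      first [reflexivity | exfalso; apply HX; lra].
Qed.

Lemma IZR_lt_half a b : (a < b)%Z -> IZR a + 1/2 < IZR b.
Proof. intros H. assert (H' : (a + 1 <= b)%Z) by lia. apply IZR_le in H'. rewrite plus_IZR in H'. lra. Qed.

Lemma triangle_odd_point_extreme A B C : detR A B C <> 0 ->
  ((snd A < snd B)%Z /\ (snd A < snd C)%Z) \/ ((snd B < snd A)%Z /\ (snd C < snd A)%Z) ->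
  exists q, interior3 A B C q /\ crossing3 q A B C = 1%nat.
Proof.
  intros HD [[HB HC]|[HB HC]];
    pose proof (IZR_lt_half _ _ HB) as B1; pose proof (IZR_lt_half _ _ HC) as C1; unfold ry in *.
  - apply (triangle_odd_point_at A B C (IZR (snd A) + 1/2)); auto; unfold ry;
      try (apply Rdiv_open_unit; lra); destruct_Rltb; simpl; auto; lra.
  - apply (triangle_odd_point_at A B C (IZR (snd A) - 1/2)); auto; unfold ry;
      try (apply Rdiv_open_unit; lra); destruct_Rltb; simpl; auto; lra.
Qed.

Lemma triangle_odd_point A B C : detR A B C <> 0 ->
  exists q, interior3 A B C q /\ Nat.odd (crossing3 q A B C) = true.
Proof.
  intros HD.
  assert (HR1 : detR B C A <> 0) by (rewrite <- detR_rot; auto).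
  assert (HR2 : detR C A B <> 0) by (rewrite <- detR_rot; auto).
  assert (Hne : ~ (snd A = snd B /\ snd B = snd C)).
  { intros [E1 E2]. apply HD. unfold detR, ry. rewrite E1, E2. ring. }
  assert (Hc : (((snd A < snd B /\ snd A < snd C) \/ (snd B < snd A /\ snd C < snd A)) \/
               ((snd B < snd C /\ snd B < snd A) \/ (snd C < snd B /\ snd A < snd B)) \/
               ((snd C < snd A /\ snd C < snd B) \/ (snd A < snd C /\ snd B < snd C)))%Z) by lia.
  destruct Hc as [H|[H|H]].
  - destruct (triangle_odd_point_extreme A B C HD H) as (q & Hq & Hc).
    exists q. rewrite Hc. auto.
  - destruct (triangle_odd_point_extreme B C A HR1 H) as (q & Hq & Hc). exists q.
    rewrite crossing3_rot, Hc. split; auto. do 2 apply interior3_rot. auto.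
  - destruct (triangle_odd_point_extreme C A B HR2 H) as (q & Hq & Hc). exists q.
    rewrite crossing3_rot, crossing3_rot, Hc. split; auto. apply interior3_rot. auto.
Qed.

Definition rot_tri (D : tri) : tri := ((tB D, tC D), tA D).

Lemma in_tri_interior_rot D q : in_tri_interior (rot_tri D) q -> in_tri_interior D q.
Proof. intro H. do 2 apply interior3_rot. exact H. Qed.

Lemma is_tri_rot sigma D : is_tri sigma D -> is_tri sigma (rot_tri D).
Proof.
  intros (Hn & H1 & H2 & H3 & H4). unfold rot_tri; repeat split; unfold tA, tB, tC in *; simpl in *; auto.
  - unfold noncollinear, tA, tB, tC in *; simpl in *. intro E; apply Hn. lia.
  - intros e q He Ho Hi. apply (H4 e q He Ho). apply in_tri_interior_rot. exact Hi.
Qed.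

(** * Lattice points in lattice triangles *)

Open Scope Z_scope.

Lemma primitive_not_fraction a b x y T D :
  Z.gcd a b = 1 -> 0 < T < D -> D*x = T*a -> D*y = T*b -> False.
Proof.
  intros Hg HT Hx Hy. destruct (Z.gcd_bezout _ _ _ Hg) as (u & v & Huv).
  assert (E : D * (u*x + v*y) = T).
  { transitivity (u*(D*x) + v*(D*y)); [ring|]. rewrite Hx, Hy.
    transitivity (T*(u*a+v*b)); [ring|]. rewrite Huv; ring. }
  set (k := u*x + v*y) in *. destruct (Z.le_gt_cases k 0); nia.
Qed.

Lemma coords_not_all_divisible u1 u2 v1 v2 D : Z.gcd u1 u2 = 1 -> 2 <= D ->
  exists e1 e2, (e1*v2 - e2*v1) mod D <> 0 \/ (u1*e2 - u2*e1) mod D <> 0.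
Proof.
  intros Gu HD.
  destruct (Z.eq_dec (v2 mod D) 0) as [A1|A1];
    [|exists 1, 0; left; rewrite Z.mul_1_l, Z.mul_0_l, Z.sub_0_r; auto].
  destruct (Z.eq_dec (u2 mod D) 0) as [A2|A2].
  2:{ exists 1, 0. right. replace (u1*0 - u2*1) with (-u2) by ring. intro E.
      apply A2. apply Z.mod_opp_l_z in E; [|lia]. rewrite Z.opp_involutive in E. auto. }
  destruct (Z.eq_dec (u1 mod D) 0) as [A4|A4].
  2:{ exists 0, 1. right. replace (u1*1 - u2*0) with u1 by ring. auto. }
  exfalso. apply Z.mod_divide in A2, A4; try lia.
  assert (Hdv : (D | Z.gcd u1 u2)) by (apply Z.gcd_greatest; auto).
  rewrite Gu in Hdv. apply Z.divide_pos_le in Hdv; lia.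
Qed.

(* The classes of [Z^2] modulo the lattice spanned by [u] and [v] are represented
   by the points [(S u + T v) / D], [0 <= S, T < D]; primitivity of [u], [v] and
   [v - u] excludes the representatives on the sides of the triangle [0 u v]. *)
Lemma nonunimodular_interior_lattice_point u1 u2 v1 v2 :
  Z.gcd u1 u2 = 1 -> Z.gcd v1 v2 = 1 -> Z.gcd (v1 - u1) (v2 - u2) = 1 ->
  2 <= Z.abs (u1*v2 - u2*v1) ->
  exists w1 w2 S T, 0 < S /\ 0 < T /\ S + T < Z.abs (u1*v2 - u2*v1) /\
    Z.abs (u1*v2 - u2*v1) * w1 = S*u1 + T*v1 /\ Z.abs (u1*v2 - u2*v1) * w2 = S*u2 + T*v2.
Proof.
  intros Gu Gv Guv Hd.
  set (d := u1*v2 - u2*v1) in *. set (D := Z.abs d) in *.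
  destruct (coords_not_all_divisible u1 u2 v1 v2 D Gu Hd) as (e1 & e2 & He).
  set (S := e1*v2 - e2*v1) in He. set (T := u1*e2 - u2*e1) in He.
  assert (Cr1 : d * e1 = S*u1 + T*v1) by (unfold d, S, T; ring).
  assert (Cr2 : d * e2 = S*u2 + T*v2) by (unfold d, S, T; ring).
  set (S' := S mod D) in He. set (T' := T mod D) in He.
  assert (HS' : 0 <= S' < D) by (apply Z.mod_pos_bound; lia).
  assert (HT' : 0 <= T' < D) by (apply Z.mod_pos_bound; lia).
  assert (Dqs : D * (S / D) = S - S') by (pose proof (Z.div_mod S D); lia).
  assert (Dqt : D * (T / D) = T - T') by (pose proof (Z.div_mod T D); lia).
  set (eps := Z.sgn d).
  assert (Hde : d = eps * D) by (unfold eps, D; rewrite Z.mul_comm; symmetry; apply Z.abs_sgn).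
  set (x1 := eps*e1 - (S/D)*u1 - (T/D)*v1). set (x2 := eps*e2 - (S/D)*u2 - (T/D)*v2).
  assert (Ex1 : D * x1 = S'*u1 + T'*v1).
  { transitivity (d*e1 - (D*(S/D))*u1 - (D*(T/D))*v1);
      [unfold x1; rewrite Hde; ring | rewrite Dqs, Dqt, Cr1; ring]. }
  assert (Ex2 : D * x2 = S'*u2 + T'*v2).
  { transitivity (d*e2 - (D*(S/D))*u2 - (D*(T/D))*v2);
      [unfold x2; rewrite Hde; ring | rewrite Dqs, Dqt, Cr2; ring]. }
  clearbody x1 x2 S' T'.
  destruct (Z.eq_dec S' 0) as [S0|S0].
  { exfalso; subst S'; apply (primitive_not_fraction v1 v2 x1 x2 T' D Gv); lia. }
  destruct (Z.eq_dec T' 0) as [T0|T0].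
  { exfalso; subst T'; apply (primitive_not_fraction u1 u2 x1 x2 S' D Gu); lia. }
  destruct (Z.lt_total (S' + T') D) as [Hlt|[Heq|Hgt]].
  - exists x1, x2, S', T'. repeat split; lia.
  - exfalso. apply (primitive_not_fraction (v1-u1) (v2-u2) (v1 - x1) (v2 - x2) S' D Guv);
      [lia | rewrite Z.mul_sub_distr_l, Ex1 | rewrite Z.mul_sub_distr_l, Ex2];
      replace T' with (D - S') by lia; ring.
  - exists (u1 + v1 - x1), (u2 + v2 - x2), (D - S'), (D - T'). repeat split; lia.
Qed.

Lemma unimodular_collinear z1 z2 p1 p2 r1 r2 :
  (z1*p2 - z2*p1 = 1 \/ z1*p2 - z2*p1 = -1) -> z1*r2 - z2*r1 = 0 ->
  exists m, r1 = m*z1 /\ r2 = m*z2.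
Proof.
  intros Hd Hr. exists ((z1*p2 - z2*p1) * (r1*p2 - r2*p1)).
  assert (C1 : r1 * (z1*p2 - z2*p1) = (r1*p2 - r2*p1) * z1 + (z1*r2 - z2*r1) * p1) by ring.
  assert (C2 : r2 * (z1*p2 - z2*p1) = (r1*p2 - r2*p1) * z2 + (z1*r2 - z2*r1) * p2) by ring.
  rewrite Hr in C1, C2. destruct Hd as [E|E]; rewrite E in *; split; lia.
Qed.

Open Scope R_scope.

Lemma primitive_open_seg_no_lattice a b m n t :
  Z.gcd a b = 1%Z -> 0 < t < 1 -> IZR m = t*IZR a -> IZR n = t*IZR b -> False.
Proof.
  intros Hg Ht Hm Hn. destruct (Z.gcd_bezout _ _ _ Hg) as (u & v & Huv).
  assert (E : IZR (u*m + v*n) = t).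
  { rewrite plus_IZR, !mult_IZR, Hm, Hn.
    transitivity (t * IZR (u*a + v*b)); [rewrite plus_IZR, !mult_IZR; ring|].
    rewrite Huv. simpl. ring. }
  rewrite <- E in Ht. destruct Ht as [H1 H2]. apply lt_IZR in H1. apply lt_IZR in H2. lia.
Qed.


(** * Lengths along a lattice line *)

Open Scope Z_scope.

Section LineLengths.

Variables z1 z2 p1 p2 : Z.

(* [line_len j] is the length of [j z - p]; by [adjacent_apex], the third sides
   of the triangles glued along an edge [z] are of this form. *)
Definition line_len (j : Z) := Z.abs (j*z1 - p1) + Z.abs (j*z2 - p2).

Let n := Z.abs z1 + Z.abs z2.

Lemma line_len_spread i j : Z.abs (i - j) * n <= line_len i + line_len j.
Proof.
  unfold line_len, n. rewrite Z.mul_add_distr_l, <- !Z.abs_mul.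
  replace ((i - j) * z1) with ((i*z1 - p1) - (j*z1 - p1)) by ring.
  replace ((i - j) * z2) with ((i*z2 - p2) - (j*z2 - p2)) by ring.
  pose proof (Z.abs_sub_triangle (i*z1 - p1) (j*z1 - p1)).
  pose proof (Z.abs_sub_triangle (i*z2 - p2) (j*z2 - p2)). lia.
Qed.

(* Two of the points [j z - p] at distance at most [n] from the origin are at most
   two steps apart, and if they are exactly two steps apart both are at distance [n]. *)
Lemma line_len_min_le_0 k : line_len 0 <= n -> line_len (k-1) <= n -> line_len k <= n ->
  Z.min (line_len (k-1)) (line_len k) <= line_len 0.
Proof.
  intros H0 H1 H2. assert (Hn : 0 <= n) by (unfold n; lia).
  destruct (Z.le_gt_cases 2 k) as [Hk|Hk].
  - pose proof (line_len_spread k 0) as Hs. rewrite Z.sub_0_r, Z.abs_eq in Hs by lia.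
    assert (2 * n <= k * n) by (apply Z.mul_le_mono_nonneg_r; lia). lia.
  - destruct (Z.le_gt_cases k 0) as [Hk'|Hk'].
    + destruct (Z.eq_dec k 0) as [->|Hk0]; [lia|].
      pose proof (line_len_spread (k-1) 0) as Hs. rewrite Z.sub_0_r, Z.abs_neq in Hs by lia.
      assert (2 * n <= - (k - 1) * n) by (apply Z.mul_le_mono_nonneg_r; lia). lia.
    + replace k with 1 by lia. rewrite Z.sub_diag. lia.
Qed.

End LineLengths.

Lemma line_len_reflect z1 z2 p1 p2 j :
  line_len z1 z2 (z1 - p1) (z2 - p2) j = line_len z1 z2 p1 p2 (1 - j).
Proof.
  unfold line_len. rewrite <- (Z.abs_opp (j*z1 - (z1 - p1))), <- (Z.abs_opp (j*z2 - (z2 - p2))).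
  f_equal; f_equal; ring.
Qed.

Lemma line_len_min_le_1 z1 z2 p1 p2 k :
  line_len z1 z2 p1 p2 1 <= Z.abs z1 + Z.abs z2 ->
  line_len z1 z2 p1 p2 (k-1) <= Z.abs z1 + Z.abs z2 -> line_len z1 z2 p1 p2 k <= Z.abs z1 + Z.abs z2 ->
  Z.min (line_len z1 z2 p1 p2 (k-1)) (line_len z1 z2 p1 p2 k) <= line_len z1 z2 p1 p2 1.
Proof.
  intros H0 H1 H2.
  pose proof (line_len_min_le_0 z1 z2 (z1 - p1) (z2 - p2) (2 - k)) as H.
  rewrite !line_len_reflect in H.
  replace (1 - (2 - k - 1)) with k in H by ring. replace (1 - (2 - k)) with (k - 1) in H by ring.
  replace (1 - 0) with 1 in H by ring. rewrite Z.min_comm in H. auto.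
Qed.

Lemma line_len_min3_le z1 z2 p1 p2 k :
  line_len z1 z2 p1 p2 (k-1) <= Z.abs z1 + Z.abs z2 -> line_len z1 z2 p1 p2 k <= Z.abs z1 + Z.abs z2 ->
  Z.min (Z.abs z1 + Z.abs z2) (Z.min (line_len z1 z2 p1 p2 (k-1)) (line_len z1 z2 p1 p2 k)) <=
  Z.min (Z.abs z1 + Z.abs z2) (Z.min (line_len z1 z2 p1 p2 0) (line_len z1 z2 p1 p2 1)).
Proof.
  intros H1 H2.
  destruct (Z.le_gt_cases (line_len z1 z2 p1 p2 0) (Z.abs z1 + Z.abs z2)) as [H0|H0].
  { pose proof (line_len_min_le_0 z1 z2 p1 p2 k H0 H1 H2).
    destruct (Z.le_gt_cases (line_len z1 z2 p1 p2 1) (Z.abs z1 + Z.abs z2)) as [H3|H3]; [|lia].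
    pose proof (line_len_min_le_1 z1 z2 p1 p2 k H3 H1 H2). lia. }
  destruct (Z.le_gt_cases (line_len z1 z2 p1 p2 1) (Z.abs z1 + Z.abs z2)) as [H3|H3]; [|lia].
  pose proof (line_len_min_le_1 z1 z2 p1 p2 k H3 H1 H2). lia.
Qed.

Definition tri_perm (D : tri) (P Q R : pt) : Prop :=
  (P = tA D /\ Q = tB D /\ R = tC D) \/ (P = tB D /\ Q = tC D /\ R = tA D) \/
  (P = tC D /\ Q = tA D /\ R = tB D) \/ (P = tB D /\ Q = tA D /\ R = tC D) \/
  (P = tA D /\ Q = tC D /\ R = tB D) \/ (P = tC D /\ Q = tB D /\ R = tA D).

Definition tri_min_len (D : tri) : Z :=
  Z.min (len (tA D, tB D)) (Z.min (len (tB D, tC D)) (len (tC D, tA D))).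

Lemma tri_perm_swap D P Q R : tri_perm D P Q R -> tri_perm D Q P R.
Proof. unfold tri_perm; intros H; decompose [or and] H; subst; tauto. Qed.

Lemma tri_perm_rot D P Q R : tri_perm D P Q R -> tri_perm D Q R P.
Proof. unfold tri_perm; intros H; decompose [or and] H; subst; tauto. Qed.

Lemma tri_perm_inS sigma D P Q R : is_tri sigma D -> tri_perm D P Q R -> inS sigma (P,Q).
Proof.
  intros (_&H1&H2&H3&_) H. unfold tri_perm in H; decompose [or and] H; subst;
    first [assumption | eapply inS_same; [apply same_edge_swap | eassumption]].
Qed.

Lemma tri_has_perm D e : tri_has D e -> exists P Q R, tri_perm D P Q R /\ same_edge e (P,Q).
Proof.
  unfold tri_has; intros [H|[H|H]].
  - exists (tA D), (tB D), (tC D). split; auto. left; auto.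
  - exists (tB D), (tC D), (tA D). split; auto. right; left; auto.
  - exists (tC D), (tA D), (tB D). split; auto. right; right; left; auto.
Qed.

Lemma tri_perm_has D P Q R e :
  tri_perm D P Q R -> same_edge e (P,Q) \/ same_edge e (Q,R) \/ same_edge e (R,P) -> tri_has D e.
Proof.
  unfold tri_has, tri_perm; intros H He.
  assert (Sw : forall a b, same_edge e (a,b) -> same_edge e (b,a))
    by (intros; eapply same_edge_trans; eauto; apply same_edge_swap).
  decompose [or and] H; subst; decompose [or] He; auto.
Qed.

Lemma tri_perm_detZ D P Q R :
  tri_perm D P Q R -> Z.abs (detZ P Q R) = Z.abs (detZ (tA D) (tB D) (tC D)).
Proof.
  unfold tri_perm, detZ; intros H; decompose [or and] H; subst;
  match goal with |- Z.abs ?a = Z.abs ?b =>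
    first [reflexivity | f_equal; ring | rewrite <- (Z.abs_opp b); f_equal; ring] end.
Qed.

Lemma tri_perm_min_len D P Q R : tri_perm D P Q R ->
  Z.min (len (P,Q)) (Z.min (len (Q,R)) (len (R,P))) = tri_min_len D.
Proof.
  unfold tri_perm, tri_min_len; intros H; decompose [or and] H; subst;
  rewrite ?(len_swap (tB D) (tA D)), ?(len_swap (tC D) (tB D)), ?(len_swap (tA D) (tC D)); lia.
Qed.

Lemma tri_has_inS sigma D e : is_tri sigma D -> tri_has D e -> inS sigma e.
Proof.
  intros (_&H1&H2&H3&_) [He|[He|He]];
    (eapply inS_same; [apply same_edge_sym; exact He|]); assumption.
Qed.

Lemma tri_mid_has D c : tri_mid D c -> exists e, tri_has D e /\ mid e = c.
Proof.
  intros [H|[H|H]]; eexists; split; try eassumption; unfold tri_has; auto using same_edge_refl.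
Qed.

Lemma tri_has_three D e1 e2 e3 : tri_has D e1 -> tri_has D e2 -> tri_has D e3 ->
  ~ same_edge e1 e2 -> ~ same_edge e2 e3 -> ~ same_edge e1 e3 ->
  forall e, tri_has D e -> same_edge e e1 \/ same_edge e e2 \/ same_edge e e3.
Proof.
  intros H1 H2 H3 N12 N23 N13 e He.
  assert (T : forall a b c, same_edge a c -> same_edge b c -> same_edge a b)
    by (intros; eapply same_edge_trans; eauto; apply same_edge_sym; auto).
  destruct H1 as [H1|[H1|H1]]; destruct H2 as [H2|[H2|H2]]; destruct H3 as [H3|[H3|H3]];
    destruct He as [He|[He|He]];
    first [ left; eapply T; eassumption | right; left; eapply T; eassumption
          | right; right; eapply T; eassumption
          | exfalso; apply N12; eapply T; eassumption
          | exfalso; apply N23; eapply T; eassumption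
          | exfalso; apply N13; eapply T; eassumption ].
Qed.

Lemma tri_perm_distinct sigma D P Q R : is_tri sigma D -> tri_perm D P Q R ->
  P <> Q /\ Q <> R /\ R <> P.
Proof.
  intros (Hn&_) H. destruct (detR_neq0_distinct _ _ _ (noncollinear_detR D Hn)) as (HAB & HBC & HCA).
  unfold tri_perm in H; decompose [or and] H; subst; repeat split; auto.
Qed.

Lemma tri_has_same D e e' : same_edge e e' -> tri_has D e' -> tri_has D e.
Proof. intros H [H'|[H'|H']]; [left|right; left|right; right]; eapply same_edge_trans; eauto. Qed.

Lemma tri_has_mid D e : tri_has D e -> tri_mid D (mid e).
Proof. intros [H|[H|H]]; apply mid_same in H; rewrite H; unfold tri_mid; auto. Qed.

Lemma tri_min_len_le D e : tri_has D e -> tri_min_len D <= len e.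
Proof. unfold tri_min_len; intros [H|[H|H]]; apply len_same in H; lia. Qed.

Lemma tri_sides_sorted D ey ez ew : tri_has D ey -> tri_has D ez -> tri_has D ew ->
  mid ez <> mid ew -> len ey > len ez -> len ez >= len ew ->
  tri_min_len D = len ew /\ longest_at D (mid ey).
Proof.
  intros Hy Hz Hw Nzw G1 G2.
  assert (Hcov := tri_has_three D ey ez ew Hy Hz Hw
    ltac:(intro E; apply len_same in E; lia) ltac:(intro E; apply mid_same in E; auto)
    ltac:(intro E; apply len_same in E; lia)).
  split.
  - pose proof (tri_min_len_le D ew Hw).
    assert (Hside : forall e, tri_has D e -> len ew <= len e)
      by (intros e He; destruct (Hcov e He) as [E|[E|E]]; apply len_same in E; lia).
    unfold tri_min_len in *.
    pose proof (Hside _ (or_introl (same_edge_refl _))).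
    pose proof (Hside _ (or_intror (or_introl (same_edge_refl _)))).
    pose proof (Hside _ (or_intror (or_intror (same_edge_refl _)))). lia.
  - exists ey. repeat split; auto.
    intros e He. destruct (Hcov e He) as [E|[E|E]]; apply len_same in E; lia.
Qed.

(** * Triangles of a triangulation lie in the polygon *)

Open Scope R_scope.

Section Triangulation.

Variables (vs : list pt) (xi sigma : edge -> Prop).
Hypothesis Hpoly : lattice_polygon vs.
Hypothesis Hxi : boundary_condition vs xi.
Hypothesis Hsigma : Omega vs xi sigma.

Lemma sigma_admissible : admissible_collection vs sigma.
Proof. exact (proj1 (proj1 Hsigma)). Qed.

Lemma inS_sigma_edge e : inS sigma e ->
  exists e', sigma e' /\ same_edge e e' /\ is_edge vs e' /\ avoids_Lambda0 vs e'.
Proof.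
  intros (e' & He' & Hs). destruct (proj1 sigma_admissible e' He'). exists e'; auto.
Qed.

Lemma inS_sigma_meet e1 e2 q : inS sigma e1 -> inS sigma e2 ->
  in_open_seg e1 q -> in_open_seg e2 q -> same_edge e1 e2.
Proof.
  intros (f1 & Hf1 & S1) (f2 & Hf2 & S2) H1 H2.
  destruct (classic (same_edge f1 f2)) as [Hs|Hs].
  - eapply same_edge_trans; [eauto|]. eapply same_edge_trans; [eauto|]. apply same_edge_sym; auto.
  - exfalso. apply (proj2 sigma_admissible f1 f2 Hf1 Hf2 Hs q). split; eapply in_open_seg_same; eauto.
Qed.

Lemma inS_sigma_mid_inj e1 e2 : inS sigma e1 -> inS sigma e2 -> mid e1 = mid e2 -> same_edge e1 e2.
Proof.
  intros H1 H2 Hm. apply (inS_sigma_meet _ _ (rmid e1) H1 H2); [apply rmid_in_open_seg|].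
  rewrite (rmid_of_mid _ _ Hm). apply rmid_in_open_seg.
Qed.

Lemma side_inS_sigma i : (i < length vs)%nat -> inS sigma (side vs i).
Proof.
  intros Hi. destruct (proj2 Hxi i Hi) as (e & He & Hs).
  destruct (proj2 Hsigma e He) as (f & Hf & Hs'). exists f. split; auto. eapply same_edge_trans; eauto.
Qed.

Lemma side_ends_Lambda0 i : (i < length vs)%nat ->
  Lambda0 vs (fst (side vs i)) /\ Lambda0 vs (snd (side vs i)).
Proof.
  intros Hi. split; left; exists i; split; auto.
  - exists 0. unfold emb; simpl. split; [lra|]. split; ring.
  - exists 1. unfold emb; simpl. split; [lra|]. split; ring.
Qed.

Lemma inS_sigma_not_interior D e q : is_tri sigma D -> inS sigma e ->
  in_open_seg e q -> ~ in_tri_interior D q.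
Proof.
  intros (_&_&_&_&HT) (f & Hf & Hs) Ho Hi. apply (HT f q Hf); auto. eapply in_open_seg_same; eauto.
Qed.

Lemma side_not_interior D i q : is_tri sigma D -> (i < length vs)%nat ->
  in_closed_seg (side vs i) q -> ~ in_tri_interior D q.
Proof.
  intros HT Hi (t & Ht & Ex & Ey) HI.
  assert (Hsig := side_inS_sigma i Hi).
  assert (HD := noncollinear_detR D (proj1 HT)).
  set (a := fst (side vs i)) in *. set (b := snd (side vs i)) in *.
  destruct (Rle_lt_or_eq_dec 0 t (proj1 Ht)) as [Ht0|Ht0];
    [destruct (Rle_lt_or_eq_dec t 1 (proj2 Ht)) as [Ht1|Ht1]|].
  - apply (inS_sigma_not_interior D _ q HT Hsig); auto. exists t. split; [lra|]. split; auto.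
  - subst t. destruct (interior3_open _ _ _ q (emb a) HD HI) as (t' & Ht' & HI').
    refine (inS_sigma_not_interior D _ _ HT Hsig _ HI').
    exists (1 - t'). unfold seg_pt, emb; cbn [fst snd]. split; [lra|]. fold a b. rewrite Ex, Ey. split; ring.
  - subst t. destruct (interior3_open _ _ _ q (emb b) HD HI) as (t' & Ht' & HI').
    refine (inS_sigma_not_interior D _ _ HT Hsig _ HI').
    exists t'. unfold seg_pt, emb; cbn [fst snd]. split; [lra|]. fold a b. rewrite Ex, Ey. split; ring.
Qed.

Lemma crossing_parity_seg u v :
  (forall t, 0 <= t <= 1 -> ~ on_boundary vs (seg_pt u v t)) ->
  Nat.odd (crossing_number vs u) = Nat.odd (crossing_number vs v).
Proof.
  intros H. apply crossing_parity_const; [destruct Hpoly; lia|].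
  intros i Hi t s Ht Hs [E1 E2]. apply (H t Ht). exists i. split; auto.
  exists s. unfold seg_pt in *; simpl in *. repeat split; auto; lra.
Qed.

Lemma interior_crossing_parity D u v : is_tri sigma D ->
  in_tri_interior D u -> in_tri_interior D v ->
  Nat.odd (crossing_number vs u) = Nat.odd (crossing_number vs v).
Proof.
  intros HT Hu Hv. apply crossing_parity_seg.
  intros t Ht (i & Hi & Hc). apply (side_not_interior D i _ HT Hi Hc).
  apply interior3_convex; auto.
Qed.

Lemma rmid_not_on_boundary e : inS sigma e -> ~ is_side vs e -> ~ on_boundary vs (rmid e).
Proof.
  intros He Hns (i & Hi & (s & Hs & Ex & Ey)).
  destruct (inS_sigma_edge e He) as (f & Hf & Hef & _ & Hav).
  destruct (Rle_lt_or_eq_dec 0 s (proj1 Hs)) as [Hs0|Hs0];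
    [destruct (Rle_lt_or_eq_dec s 1 (proj2 Hs)) as [Hs1|Hs1]|].
  - apply Hns. exists i. split; auto.
    apply (inS_sigma_meet _ _ (rmid e) He (side_inS_sigma i Hi) (rmid_in_open_seg e)).
    exists s. split; [lra|]. auto.
  - subst s. apply (Hav (snd (side vs i)) (proj2 (side_ends_Lambda0 i Hi))).
    replace (emb (snd (side vs i))) with (rmid e); [eapply in_open_seg_same; eauto; apply rmid_in_open_seg|].
    destruct (rmid e). unfold emb; simpl in *. f_equal; lra.
  - subst s. apply (Hav (fst (side vs i)) (proj1 (side_ends_Lambda0 i Hi))).
    replace (emb (fst (side vs i))) with (rmid e); [eapply in_open_seg_same; eauto; apply rmid_in_open_seg|].
    destruct (rmid e). unfold emb; simpl in *. f_equal; lra.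
Qed.

(* The midpoint of a non-side edge is inside [P] and off its boundary, so it has
   odd crossing number; the segment from it to the opposite vertex enters the
   interior of [D] without touching the boundary. *)
Lemma interior_odd_of_nonside D : is_tri sigma D -> ~ is_side vs (tA D, tB D) ->
  exists q, in_tri_interior D q /\ Nat.odd (crossing_number vs q) = true.
Proof.
  intros HT Hns.
  assert (He : inS sigma (tA D, tB D)) by (destruct HT as (_&?&_); auto).
  assert (Hnb := rmid_not_on_boundary _ He Hns).
  set (m := rmid (tA D, tB D)) in *.
  assert (Hodd : Nat.odd (crossing_number vs m) = true).
  { destruct (inS_sigma_edge _ He) as (f & Hf & Hef & (_&_&_&Hop) & _).
    destruct (Hop m); [eapply in_open_seg_same; eauto; apply rmid_in_open_seg|contradiction|auto]. }
  assert (Hint : forall t, 0 < t < 1 -> in_tri_interior D (seg_pt m (emb (tC D)) t)).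
  { intros t Ht. eapply interior3_ext; [| |apply (interior3_of_edge_pt _ _ _ (1/2) t)]; try lra;
      unfold seg_pt, m, rmid, emb; simpl; field. }
  exists (seg_pt m (emb (tC D)) (1/2)). split; [apply Hint; lra|].
  rewrite <- Hodd. symmetry. apply crossing_parity_seg.
  intros t Ht Hb. destruct (Rle_lt_or_eq_dec 0 t (proj1 Ht)) as [Ht0|Ht0].
  - destruct Hb as (i & Hi & Hc). apply (side_not_interior D i _ HT Hi Hc).
    eapply interior3_ext; [| |apply (Hint (t/2) ltac:(lra))]; unfold seg_pt; simpl; field.
  - subst t. apply Hnb. replace m with (seg_pt m (seg_pt m (emb (tC D)) (1 / 2)) 0); auto.
    unfold seg_pt. destruct m. simpl. f_equal; ring.
Qed.

(* Some interior point has odd crossing number: either some side of [D] is not a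
   side of [P], or [P] is the triangle [D] itself. *)
Lemma interior_inP D q : is_tri sigma D -> in_tri_interior D q -> inP vs q.
Proof.
  intros HT Hq. right.
  assert (Hq0 : exists q0, in_tri_interior D q0 /\ Nat.odd (crossing_number vs q0) = true).
  { destruct (classic (is_side vs (tA D, tB D))) as [S1|S1];
      [|apply (interior_odd_of_nonside D HT S1)].
    destruct (classic (is_side vs (tB D, tC D))) as [S2|S2].
    2:{ destruct (interior_odd_of_nonside (rot_tri D) (is_tri_rot _ _ HT) S2) as (q0 & H0 & H0').
        exists q0; split; auto. apply in_tri_interior_rot; auto. }
    destruct (classic (is_side vs (tC D, tA D))) as [S3|S3].
    2:{ destruct (interior_odd_of_nonside (rot_tri (rot_tri D))
                    (is_tri_rot _ _ (is_tri_rot _ _ HT)) S3) as (q0 & H0 & H0').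
        exists q0; split; auto. do 2 apply in_tri_interior_rot; auto. }
    assert (HD := noncollinear_detR D (proj1 HT)).
    destruct (detR_neq0_distinct _ _ _ HD) as (HAB & HBC & HCA).
    destruct Hpoly as (H3 & ND & _).
    destruct (triangle_odd_point _ _ _ HD) as (q0 & Hq0 & Ho). exists q0. split; auto.
    rewrite (crossing_number_three_sides vs (tA D) (tB D) (tC D)); auto. }
  destruct Hq0 as (q0 & Hq0 & Ho). rewrite <- Ho. symmetry. eapply interior_crossing_parity; eauto.
Qed.

(** * Triangles of a triangulation are unimodular *)

Lemma inS_sigma_ends_Lambda0 P Q : inS sigma (P,Q) -> Lambda0 vs P /\ Lambda0 vs Q.
Proof.
  intros H. destruct (inS_sigma_edge _ H) as (f & _ & Hs & (_&H1&H2&_) & _).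
  destruct f as [f1 f2]. destruct Hs as [E|E]; inversion E; subst; simpl in *; auto.
Qed.

Lemma lattice_step_emb (A : pt) kx ky g :
  IZR g <> 0 ->
  emb (fst A + kx, snd A + ky)%Z =
  seg_pt (emb A) (emb (fst A + kx * g, snd A + ky * g)%Z) (1 / IZR g).
Proof.
  intros Hg. unfold emb, seg_pt, rx, ry; simpl. rewrite !plus_IZR, !mult_IZR.
  f_equal; field; auto.
Qed.

Lemma inS_sigma_primitive P Q : inS sigma (P,Q) -> P <> Q ->
  Z.gcd (fst Q - fst P) (snd Q - snd P) = 1%Z.
Proof.
  intros H HPQ.
  destruct (inS_sigma_edge _ H) as (f & _ & Hs & (_&_&_&Hop) & Hav).
  set (dx := (fst Q - fst P)%Z). set (dy := (snd Q - snd P)%Z).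
  set (g := Z.gcd dx dy). assert (Hg0 := Z.gcd_nonneg dx dy). fold g in Hg0.
  destruct (Z.eq_dec g 0) as [G0|G0].
  { exfalso. apply Z.gcd_eq_0 in G0. destruct P, Q; unfold dx, dy in G0; simpl in G0.
    apply HPQ. f_equal; lia. }
  destruct (Z.eq_dec g 1) as [G1|G1]; auto. exfalso.
  destruct (Z.gcd_divide_l dx dy) as [kx Hkx]. destruct (Z.gcd_divide_r dx dy) as [ky Hky].
  fold g in Hkx, Hky.
  assert (Hgr : 2 <= IZR g) by (apply IZR_le; lia).
  assert (EQ : Q = (fst P + kx * g, snd P + ky * g)%Z)
    by (destruct P, Q; unfold dx, dy in *; simpl in *; f_equal; lia).
  assert (Hz : in_open_seg (P,Q) (emb (fst P + kx, snd P + ky)%Z)).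
  { rewrite (lattice_step_emb P kx ky g) by lra. exists (1 / IZR g). rewrite <- EQ. unfold seg_pt, emb; simpl.
    split; [|split; ring]. apply Rdiv_open_unit; lra. }
  apply (Hav (fst P + kx, snd P + ky)%Z); [apply Hop|]; eapply in_open_seg_same; eauto.
Qed.

(* By maximality of [sigma]: a primitive segment from a vertex running inside [D]
   meets no edge of [sigma] and no lattice point, hence is itself an edge. *)
Lemma interior_chord_inS_sigma D A p : is_tri sigma D -> Lambda0 vs A ->
  Z.gcd (fst p - fst A) (snd p - snd A) = 1%Z -> in_tri_interior D (emb p) ->
  (forall q, in_open_seg (A, p) q -> in_tri_interior D q) -> inS sigma (A, p).
Proof.
  intros HT HA Hk Hp Hopen. apply (proj2 (proj1 Hsigma)).
  - repeat split; auto.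
    + simpl; intro E. subst p. rewrite !Z.sub_diag in Hk. discriminate.
    + apply (interior_inP D _ HT Hp).
    + intros q Hq. apply (interior_inP D _ HT (Hopen q Hq)).
  - intros z _ (t & Ht & Ex & Ey).
    apply (primitive_open_seg_no_lattice _ _ (fst z - fst A) (snd z - snd A) t Hk Ht);
      unfold emb, rx, ry in *; simpl in *; rewrite !minus_IZR; [rewrite Ex|rewrite Ey]; ring.
  - intros e' He' _ q [Hq Hq']. apply (inS_sigma_not_interior D e' q HT); auto.
    exists e'; split; auto. apply same_edge_refl.
Qed.

Lemma interior_no_lattice_point D r : is_tri sigma D -> ~ in_tri_interior D (emb r).
Proof.
  intros HT Hr.
  assert (HD := noncollinear_detR D (proj1 HT)).
  assert (HAB : inS sigma (tA D, tB D)) by apply HT.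
  set (A := tA D) in *.
  destruct (classic (r = A)) as [E|E].
  { subst r. destruct (interior3_open _ _ _ _ (emb (tB D)) HD Hr) as (t & Ht & Hi).
    apply (inS_sigma_not_interior D _ (seg_pt (emb A) (emb (tB D)) t) HT HAB); auto.
    exists t. unfold seg_pt, emb; simpl. split; auto. }
  set (w1 := (fst r - fst A)%Z). set (w2 := (snd r - snd A)%Z).
  set (g := Z.gcd w1 w2). assert (Hg0 := Z.gcd_nonneg w1 w2). fold g in Hg0.
  destruct (Z.eq_dec g 0) as [G0|G0].
  { apply Z.gcd_eq_0 in G0. apply E. destruct r, A; unfold w1, w2 in G0; simpl in G0. f_equal; lia. }
  destruct (Z.gcd_divide_l w1 w2) as [kx Hkx]. destruct (Z.gcd_divide_r w1 w2) as [ky Hky].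
  fold g in Hkx, Hky.
  assert (Hk : Z.gcd kx ky = 1%Z).
  { assert (H := Z.gcd_div_gcd w1 w2 g G0 eq_refl). rewrite Hkx, Hky in H at 1.
    rewrite !Z.div_mul in H by auto. exact H. }
  set (p := (fst A + kx, snd A + ky)%Z).
  assert (Hgr : 1 <= IZR g) by (apply IZR_le; lia).
  assert (Hp : in_tri_interior D (emb p)).
  { unfold p. rewrite (lattice_step_emb A kx ky g) by lra.
    replace (fst A + kx * g, snd A + ky * g)%Z with r
      by (destruct r; unfold w1, w2 in *; simpl in *; f_equal; lia).
    apply interior3_toward_vertex; auto. split; [apply Rdiv_lt_0_compat; lra|].
    apply Rmult_le_reg_r with (IZR g); [lra|]. field_simplify; lra. }
  assert (Hopen : forall q, in_open_seg (A, p) q -> in_tri_interior D q).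
  { intros q (t & Ht & Ex & Ey).
    eapply interior3_ext; [| |apply (interior3_toward_vertex _ _ _ (emb p) t Hp ltac:(lra))];
      unfold seg_pt, emb; simpl in *; [rewrite Ex|rewrite Ey]; unfold A; ring. }
  assert (HA : Lambda0 vs A) by exact (proj1 (inS_sigma_ends_Lambda0 _ _ HAB)).
  assert (Hp' : Z.gcd (fst p - fst A) (snd p - snd A) = 1%Z)
    by (unfold p; simpl; rewrite !Z.add_simpl_l; exact Hk).
  apply (inS_sigma_not_interior D (A,p) (rmid (A,p)) HT
           (interior_chord_inS_sigma D A p HT HA Hp' Hp Hopen) (rmid_in_open_seg _)).
  apply Hopen, rmid_in_open_seg.
Qed.

Lemma tri_unimodular D : is_tri sigma D -> Z.abs (detZ (tA D) (tB D) (tC D)) = 1%Z.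
Proof.
  intros HT. assert (HT' := HT). destruct HT' as (Hn & H1 & H2 & H3 & _).
  assert (HD := noncollinear_detR D Hn).
  destruct (detR_neq0_distinct _ _ _ HD) as (HAB & HBC & HCA).
  set (A := tA D) in *. set (B := tB D) in *. set (C := tC D) in *.
  assert (Gu := inS_sigma_primitive _ _ H1 HAB).
  assert (Gv : Z.gcd (fst C - fst A) (snd C - snd A) = 1%Z).
  { rewrite <- Z.gcd_opp_l, <- Z.gcd_opp_r, <- (inS_sigma_primitive _ _ H3 HCA). f_equal; ring. }
  assert (Gw : Z.gcd ((fst C - fst A) - (fst B - fst A)) ((snd C - snd A) - (snd B - snd A)) = 1%Z).
  { rewrite <- (inS_sigma_primitive _ _ H2 HBC). f_equal; ring. }
  unfold noncollinear in Hn. fold A B C in Hn.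
  destruct (Z.eq_dec (Z.abs (detZ A B C)) 1) as [E|E]; auto. exfalso.
  destruct (nonunimodular_interior_lattice_point _ _ _ _ Gu Gv Gw ltac:(unfold detZ in E; lia))
    as (w1 & w2 & S & T & HS0 & HT0 & HST & E1 & E2).
  set (Dd := Z.abs ((fst B - fst A) * (snd C - snd A) - (snd B - snd A) * (fst C - fst A))) in *.
  apply (interior_no_lattice_point D (fst A + w1, snd A + w2)%Z HT).
  assert (HDr : 2 <= IZR Dd) by (apply IZR_le; unfold detZ in E; lia).
  assert (HSr : 0 < IZR S) by (apply IZR_lt; lia).
  assert (HTr : 0 < IZR T) by (apply IZR_lt; lia).
  assert (HSTr : IZR S + IZR T < IZR Dd) by (rewrite <- plus_IZR; apply IZR_lt; lia).
  apply IZR_eq in E1, E2. rewrite !mult_IZR, !plus_IZR, !mult_IZR, !minus_IZR in E1, E2.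
  exists ((IZR Dd - IZR S - IZR T) / IZR Dd), (IZR S / IZR Dd), (IZR T / IZR Dd).
  repeat split; try (apply Rdiv_lt_0_compat; lra); try (field; lra);
    unfold emb, rx, ry; simpl; rewrite plus_IZR; fold A B C;
    apply Rmult_eq_reg_r with (IZR Dd); try lra.
  - replace ((IZR (fst A) + IZR w1) * IZR Dd) with (IZR (fst A) * IZR Dd + IZR Dd * IZR w1) by ring.
    rewrite E1. field. lra.
  - replace ((IZR (snd A) + IZR w2) * IZR Dd) with (IZR (snd A) * IZR Dd + IZR Dd * IZR w2) by ring.
    rewrite E2. field. lra.
Qed.

(** * Triangles glued along an edge *)

Lemma apex_translate_absurd D0 D P Q R S m : is_tri sigma D0 -> is_tri sigma D ->
  tri_perm D0 P Q R -> tri_perm D P Q S -> m <> 0%Z ->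
  fst S = (fst R + m * (fst Q - fst P))%Z -> snd S = (snd R + m * (snd Q - snd P))%Z -> False.
Proof.
  intros HT0 HT H0 H Hm E1 E2.
  destruct (tri_perm_distinct _ _ _ _ _ HT0 H0) as (PQ & QR & RP).
  assert (Rq1 : rx S = rx R + IZR m * (rx Q - rx P))
    by (unfold rx; rewrite E1, plus_IZR, mult_IZR, minus_IZR; ring).
  assert (Rq2 : ry S = ry R + IZR m * (ry Q - ry P))
    by (unfold ry; rewrite E2, plus_IZR, mult_IZR, minus_IZR; ring).
  assert (HR : forall T A B C, is_tri sigma T -> tri_perm T A B C -> inS sigma (B,A))
    by (intros T A B C HT' HP; eapply inS_same; [apply same_edge_swap|]; exact (tri_perm_inS _ _ _ _ _ HT' HP)).
  destruct (proj1 (Z.lt_gt_cases m 0) Hm) as [Mn|Mp].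
  - (* the edges [P R] and [Q S] cross *)
    assert (Hm' : IZR m <= -1) by (apply IZR_le; lia).
    set (t := 1 / (1 - IZR m)).
    assert (Ht : 0 < t < 1) by (apply Rdiv_open_unit; lra).
    assert (Hmeet : same_edge (P,R) (Q,S)).
    { apply (inS_sigma_meet _ _ (rx P + t * (rx R - rx P), ry P + t * (ry R - ry P))
               (HR _ _ _ _ HT0 (tri_perm_rot _ _ _ _ (tri_perm_rot _ _ _ _ H0)))
               (tri_perm_inS sigma D Q S P HT (tri_perm_rot _ _ _ _ H)));
        exists t; (split; [auto|]); simpl; [split; reflexivity|].
      rewrite Rq1, Rq2. unfold t. split; field; lra. }
    destruct Hmeet as [E|E]; injection E; intros; congruence.
  - (* the edges [Q R] and [P S] cross *)
    assert (Hm' : 1 <= IZR m) by (apply IZR_le; lia).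
    set (t := 1 / (1 + IZR m)).
    assert (Ht : 0 < t < 1) by (apply Rdiv_open_unit; lra).
    assert (Hmeet : same_edge (Q,R) (P,S)).
    { apply (inS_sigma_meet _ _ (rx Q + t * (rx R - rx Q), ry Q + t * (ry R - ry Q))
               (tri_perm_inS sigma D0 Q R P HT0 (tri_perm_rot _ _ _ _ H0))
               (HR _ _ _ _ HT (tri_perm_rot _ _ _ _ (tri_perm_rot _ _ _ _ H))));
        exists t; (split; [auto|]); simpl; [split; reflexivity|].
      rewrite Rq1, Rq2. unfold t. split; field; lra. }
    destruct Hmeet as [E|E]; injection E; intros; congruence.
Qed.

Open Scope Z_scope.

(* Both triangles are unimodular, so [S - P] and [R - P] have determinant [+-1]
   against [Q - P]: then [S - R] or [S - P + R - P] is a multiple of [Q - P]. *)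
Lemma adjacent_apex D0 D P Q R S : is_tri sigma D0 -> is_tri sigma D ->
  tri_perm D0 P Q R -> tri_perm D P Q S ->
  S = R \/ exists k, fst S - fst P = k*(fst Q - fst P) - (fst R - fst P) /\
                     snd S - snd P = k*(snd Q - snd P) - (snd R - snd P).
Proof.
  intros HT0 HT H0 H.
  assert (U0 := tri_unimodular D0 HT0). assert (U1 := tri_unimodular D HT).
  rewrite <- (tri_perm_detZ _ _ _ _ H0) in U0. rewrite <- (tri_perm_detZ _ _ _ _ H) in U1.
  unfold detZ in U0, U1.
  set (z1 := fst Q - fst P) in *. set (z2 := snd Q - snd P) in *.
  set (p1 := fst R - fst P) in *. set (p2 := snd R - snd P) in *.
  set (q1 := fst S - fst P) in *. set (q2 := snd S - snd P) in *.
  assert (E0 : z1*p2 - z2*p1 = 1 \/ z1*p2 - z2*p1 = -1) by lia.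
  destruct (Z.eq_dec (z1*q2 - z2*q1) (-(z1*p2 - z2*p1))) as [Opp|Same].
  - right. destruct (unimodular_collinear z1 z2 p1 p2 (p1 + q1) (p2 + q2) E0 ltac:(lia))
      as (k & K1 & K2).
    exists k. lia.
  - destruct (unimodular_collinear z1 z2 p1 p2 (q1 - p1) (q2 - p2) E0 ltac:(lia))
      as (m & M1 & M2).
    destruct (Z.eq_dec m 0) as [M0|M0].
    + left. subst m. destruct S, R; unfold q1, q2, p1, p2 in *; simpl in *. f_equal; lia.
    + exfalso. apply (apex_translate_absurd D0 D P Q R S m HT0 HT H0 H M0); lia.
Qed.

Lemma tri_min_len_glued D0 D P Q R S k : tri_perm D0 P Q R -> tri_perm D P Q S ->
  fst S - fst P = k*(fst Q - fst P) - (fst R - fst P) ->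
  snd S - snd P = k*(snd Q - snd P) - (snd R - snd P) ->
  len (Q,S) <= len (P,Q) -> len (S,P) <= len (P,Q) ->
  tri_min_len D <= tri_min_len D0.
Proof.
  intros H0 H K1 K2 L1 L2.
  rewrite <- (tri_perm_min_len _ _ _ _ H0), <- (tri_perm_min_len _ _ _ _ H).
  set (f := line_len (fst Q - fst P) (snd Q - snd P) (fst R - fst P) (snd R - snd P)).
  assert (Lz : len (P,Q) = Z.abs (fst Q - fst P) + Z.abs (snd Q - snd P)) by (unfold len; cbn [fst snd]; lia).
  assert (L0 : len (R,P) = f 0) by (unfold f, len, line_len; cbn [fst snd]; lia).
  assert (L1' : len (Q,R) = f 1) by (unfold f, len, line_len; cbn [fst snd]; lia).
  assert (Lk : len (S,P) = f k) by (unfold f, len, line_len; cbn [fst snd]; rewrite <- K1, <- K2; lia).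
  assert (Lk' : len (Q,S) = f (k-1)).
  { unfold f, len, line_len; cbn [fst snd]. rewrite !Z.mul_sub_distr_r, !Z.mul_1_l.
    replace (k * (fst Q - fst P) - (fst Q - fst P) - (fst R - fst P))
      with ((k * (fst Q - fst P) - (fst R - fst P)) - (fst Q - fst P)) by ring.
    replace (k * (snd Q - snd P) - (snd Q - snd P) - (snd R - snd P))
      with ((k * (snd Q - snd P) - (snd R - snd P)) - (snd Q - snd P)) by ring.
    rewrite <- K1, <- K2. lia. }
  rewrite Lz, L0, L1', Lk, Lk' in *.
  pose proof (line_len_min3_le _ _ _ _ k L1 L2) as Hmin. fold f in Hmin. lia.
Qed.

Lemma tri_min_len_adjacent D0 D e : is_tri sigma D0 -> is_tri sigma D ->
  tri_has D0 e -> tri_has D e -> (forall e', tri_has D e' -> len e' <= len e) ->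
  tri_min_len D <= tri_min_len D0.
Proof.
  intros HT0 HT He0 He Hlong.
  destruct (tri_has_perm _ _ He0) as (P & Q & R & H0 & S0).
  destruct (tri_has_perm _ _ He) as (P' & Q' & S & H & S1).
  assert (HPQ : tri_perm D P Q S).
  { destruct (same_edge_trans _ _ _ (same_edge_sym _ _ S1) S0) as [E|E]; injection E; intros; subst;
      auto using tri_perm_swap. }
  assert (Le : len e = len (P,Q)) by (apply len_same; auto).
  assert (L1 : len (Q,S) <= len (P,Q))
    by (rewrite <- Le; apply Hlong, (tri_perm_has _ _ _ _ _ HPQ); right; left; apply same_edge_refl).
  assert (L2 : len (S,P) <= len (P,Q))
    by (rewrite <- Le; apply Hlong, (tri_perm_has _ _ _ _ _ HPQ); right; right; apply same_edge_refl).
  destruct (adjacent_apex D0 D P Q R S HT0 HT H0 HPQ) as [ES|(k & K1 & K2)].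
  - subst S. rewrite <- (tri_perm_min_len _ _ _ _ H0), <- (tri_perm_min_len _ _ _ _ HPQ). lia.
  - exact (tri_min_len_glued D0 D P Q R S k H0 HPQ K1 K2 L1 L2).
Qed.

(** * Along the tree of influence *)

Definition shortest_side_bound (w : Z) (c : pt) : Prop :=
  forall D, is_tri sigma D -> longest_at D c -> tri_min_len D <= w.

Lemma shortest_side_bound_of_edge D0 c : is_tri sigma D0 -> tri_mid D0 c ->
  shortest_side_bound (tri_min_len D0) c.
Proof.
  intros HT0 Hc D HT (e & He & Hme & Hlong).
  destruct (tri_mid_has _ _ Hc) as (e0 & He0 & Hm0).
  assert (E : same_edge e e0)
    by (apply inS_sigma_mid_inj;
        [exact (tri_has_inS _ _ _ HT He) | exact (tri_has_inS _ _ _ HT0 He0) | congruence]).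
  exact (tri_min_len_adjacent D0 D e HT0 HT (tri_has_same _ _ _ E He0) He Hlong).
Qed.

Variable x : pt.
Hypothesis Hx : Fdec sigma x \/ Fdiag sigma x.

Lemma tchild_triangle p c : tchild sigma x p c ->
  exists D0, is_tri sigma D0 /\ tri_mid D0 c /\ longest_at D0 p.
Proof.
  destruct 1 as [D c HT Hx0 Hc _ | z y D c _ HT _ _ Hlong Hc _]; exists D; (split; [|split]); auto.
  assert (Hf : exists e0, sig_at sigma x e0 /\
                 forall D, is_tri sigma D -> tri_has D e0 -> longest_edge D e0)
    by (destruct Hx as [(e0 & Hs & _ & Hl)|(e0 & Hs & _ & Hl)]; exists e0; auto).
  destruct Hf as (e0 & (Hs & Hme) & Hl).
  destruct (tri_mid_has _ _ Hx0) as (e & He & Hm).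
  assert (E : same_edge e0 e)
    by (apply inS_sigma_mid_inj; [exact Hs | exact (tri_has_inS _ _ _ HT He) | congruence]).
  destruct (Hl D HT (tri_has_same _ _ _ E He)) as [Hh Hmax].
  exists e0. auto.
Qed.

Lemma shortest_side_bound_child w p c :
  shortest_side_bound w p -> tchild sigma x p c -> shortest_side_bound w c.
Proof.
  intros Hp Hc D HT Hlong.
  destruct (tchild_triangle p c Hc) as (D0 & HT0 & Hc0 & Hlong0).
  pose proof (Hp D0 HT0 Hlong0).
  pose proof (shortest_side_bound_of_edge D0 c HT0 Hc0 D HT Hlong). lia.
Qed.

Lemma shortest_side_bound_ancestor w a b :
  shortest_side_bound w a -> ancestor sigma x a b -> shortest_side_bound w b.
Proof.
  intros Ha Hab. induction Hab as [a b Hab|a b c _ IH1 _ IH2].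
  - eapply shortest_side_bound_child; eauto.
  - apply IH2, IH1, Ha.
Qed.

End Triangulation.

Theorem mainTheorem5 (vs : list pt) (xi sigma : edge -> Prop) (x : pt)
    (D1 D2 : tri) (y1 z1 w1 y2 z2 w2 : pt)
    (ey1 ez1 ew1 ey2 ez2 ew2 : edge) :
  lattice_polygon vs ->
  boundary_condition vs xi ->
  Omega vs xi sigma ->
  (Fdec sigma x \/ Fdiag sigma x) ->
  is_tri sigma D1 -> is_tri sigma D2 ->
  sig_at sigma y1 ey1 -> sig_at sigma z1 ez1 -> sig_at sigma w1 ew1 ->
  sig_at sigma y2 ey2 -> sig_at sigma z2 ez2 -> sig_at sigma w2 ew2 ->
  tri_has D1 ey1 -> tri_has D1 ez1 -> tri_has D1 ew1 -> z1 <> w1 ->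
  tri_has D2 ey2 -> tri_has D2 ez2 -> tri_has D2 ew2 -> z2 <> w2 ->
  (len ey1 > len ez1)%Z -> (len ez1 >= len ew1)%Z ->
  (len ey2 > len ez2)%Z -> (len ez2 >= len ew2)%Z ->
  in_tree sigma x y1 -> in_tree sigma x z1 -> in_tree sigma x w1 ->
  in_tree sigma x y2 -> in_tree sigma x z2 -> in_tree sigma x w2 ->
  tchild sigma x y1 z1 -> tchild sigma x y1 w1 ->
  tchild sigma x y2 z2 -> tchild sigma x y2 w2 ->
  ancestor sigma x y1 y2 ->
  (len ew1 >= len ew2)%Z.
Proof.
  intros Hpoly Hxi Hsigma Hx HT1 HT2 [_ My1] [_ Mz1] [_ Mw1] [_ My2] [_ Mz2] [_ Mw2]
    Hy1 Hz1 Hw1 Nzw1 Hy2 Hz2 Hw2 Nzw2 G1 G2 G3 G4 _ _ _ _ _ _ _ _ _ _ Hanc.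
  subst y1 z1 w1 y2 z2 w2.
  destruct (tri_sides_sorted D1 ey1 ez1 ew1 Hy1 Hz1 Hw1 Nzw1 G1 G2) as [Hmin1 _].
  destruct (tri_sides_sorted D2 ey2 ez2 ew2 Hy2 Hz2 Hw2 Nzw2 G3 G4) as [Hmin2 Hlong2].
  assert (Hroot := shortest_side_bound_of_edge vs xi sigma Hpoly Hxi Hsigma D1 (mid ey1) HT1
                     (tri_has_mid D1 ey1 Hy1)).
  pose proof (shortest_side_bound_ancestor vs xi sigma Hpoly Hxi Hsigma x Hx _ _ _ Hroot Hanc
                D2 HT2 Hlong2).
  lia.
Qed.
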